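(* Let $A$ be a densely defined closed operator in a complex Hilbert space $\mathcal{H}$ such that $\operatorname{Num}(A)$ has an interior point, $\operatorname{Num}(A)\neq\mathbb{C}$, $\operatorname{D}(A)\subset\operatorname{D}(A^* )$ and $\sigma(A)\subset\overline{\operatorname{Num}}(A)$. If $\lambda\in\partial\operatorname{Num}(A)$ is a point of unilateral infinite curvature of $\partial\overline{\operatorname{Num}}(A)$ but not a corner point, then $\operatorname{Ran}(A-\lambda I)$ is not closed. In particular, $\lambda\in\sigma_{ess}(A)$.
   Context: $\operatorname{Num}(A)=\{\langle Af,f\rangle: f\in\operatorname{D}(A),\|f\|=1\}$, $\overline{\operatorname{Num}}(A)$ its closure. $\sigma_{ess}(A)=\{\lambda\in\mathbb{C}: A-\lambda I \text{ is not Fredholm}\}$, where an operator is Fredholm if it has closed range and finite-dimensional kernel and cokernel. Curvature conventions. Let $\Omega\subset\mathbb{C}$ be a closed convex set with nonempty interior and $\lambda\in\partial\Omega$. There is at least one supporting line of $\Omega$ through $\lambda$; $\lambda$ is called a corner point if there is more than one. If $\lambda$ is a corner point, $\Omega$ lies in a closed sector with vertex $\lambda$ and semivertical angle $<\pi/2$; take the smallest such sector and let $l_\lambda$ be the supporting line through $\lambda$ orthogonal to the axis of this sector; otherwise $l_\lambda$ is the unique supporting line. Use rectangular coordinates $(\xi,\eta)$ with origin at $\lambda$, $\xi$-axis equal to $l_\lambda$, oriented so that $\Omega\subset\{\eta\ge 0\}$. Let $D'_\varepsilon=\{(\xi,\eta):\xi^2+\eta^2\le\varepsilon^2,\ \xi\neq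 0\}$. Define $\gamma_u^+(\lambda)=\lim_{\varepsilon\downarrow 0}\sup\{\eta/\xi^2:(\xi,\eta)\in\partial\Omega\cap D'_\varepsilon,\ \xi>0\}$ and $\gamma_l^+(\lambda)$ the same with $\inf$ in place of $\sup$; $\gamma_u^-(\lambda),\gamma_l^-(\lambda)$ are defined analogously with $\xi<0$. Set $\gamma_u(\lambda)=\max(\gamma_u^+(\lambda),\gamma_u^-(\lambda))$, $\gamma_l(\lambda)=\min(\gamma_l^+(\lambda),\gamma_l^-(\lambda))$. The point $\lambda$ is of infinite upper curvature if $\gamma_u(\lambda)=\infty$, and of unilateral infinite curvature if $\gamma_l^+(\lambda)=\infty$ or $\gamma_l^-(\lambda)=\infty$. For an operator $A$, these notions at $\lambda\in\partial\operatorname{Num}(A)$ refer to $\Omega=\overline{\operatorname{Num}}(A)$. *)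

From Stdlib Require Import Reals Lra List.
Open Scope R_scope.

Record Cplx : Type := mkC { Cre : R; Cim : R }.

Definition C0 : Cplx := mkC 0 0.
Definition C1 : Cplx := mkC 1 0.
Definition Ci : Cplx := mkC 0 1.
Definition Cadd (z w : Cplx) : Cplx := mkC (Cre z + Cre w) (Cim z + Cim w).
Definition Copp (z : Cplx) : Cplx := mkC (- Cre z) (- Cim z).
Definition Csub (z w : Cplx) : Cplx := Cadd z (Copp w).
Definition Cmul (z w : Cplx) : Cplx :=
  mkC (Cre z * Cre w - Cim z * Cim w) (Cre z * Cim w + Cim z * Cre w).
Definition Cconj (z : Cplx) : Cplx := mkC (Cre z) (- Cim z).
Definition Cabs (z : Cplx) : R := sqrt (Cre z * Cre z + Cim z * Cim z).

Record PreHilbert : Type := {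
  carrier :> Type;
  hzero : carrier;
  hadd : carrier -> carrier -> carrier;
  hopp : carrier -> carrier;
  hscal : Cplx -> carrier -> carrier;
  inner : carrier -> carrier -> Cplx;
  hadd_assoc : forall x y z, hadd x (hadd y z) = hadd (hadd x y) z;
  hadd_comm : forall x y, hadd x y = hadd y x;
  hadd_zero : forall x, hadd x hzero = x;
  hadd_opp : forall x, hadd x (hopp x) = hzero;
  hscal_one : forall x, hscal C1 x = x;
  hscal_assoc : forall a b x, hscal a (hscal b x) = hscal (Cmul a b) x;
  hscal_addr : forall a x y, hscal a (hadd x y) = hadd (hscal a x) (hscal a y);
  hscal_addl : forall a b x, hscal (Cadd a b) x = hadd (hscal a x) (hscal b x);
  inner_addl : forall x y z, inner (hadd x y) z = Cadd (inner x z) (inner y z);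
  inner_scall : forall a x y, inner (hscal a x) y = Cmul a (inner x y);
  inner_conj : forall x y, inner y x = Cconj (inner x y);
  inner_pos : forall x, 0 <= Cre (inner x x);
  inner_def : forall x, inner x x = C0 -> x = hzero
}.

Arguments hzero {p}.
Arguments hadd {p}.
Arguments hopp {p}.
Arguments hscal {p}.
Arguments inner {p}.

Definition hsub {H : PreHilbert} (x y : H) : H := hadd x (hopp y).
Definition hnorm {H : PreHilbert} (x : H) : R := sqrt (Cre (inner x x)).

Definition hconverges {H : PreHilbert} (u : nat -> H) (l : H) : Prop :=
  forall eps, eps > 0 -> exists N, forall n, (N <= n)%nat -> hnorm (hsub (u n) l) < eps.

Definition hcauchy {H : PreHilbert} (u : nat -> H) : Prop :=
  forall eps, eps > 0 -> exists N, forall m n, (N <= m)%nat -> (N <= n)%nat ->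
    hnorm (hsub (u m) (u n)) < eps.

Record Hilbert : Type := {
  pre :> PreHilbert;
  complete : forall u : nat -> pre, hcauchy u -> exists l, hconverges u l
}.

(* An operator in H: a domain D(A) and the action of A (meaningful on D(A)). *)
Record Operator (H : PreHilbert) : Type := { dom : H -> Prop; app : H -> H }.
Arguments dom {H}.
Arguments app {H}.

Definition linear_operator {H : PreHilbert} (A : Operator H) : Prop :=
  dom A hzero /\
  (forall f g, dom A f -> dom A g -> dom A (hadd f g) /\ app A (hadd f g) = hadd (app A f) (app A g)) /\
  (forall a f, dom A f -> dom A (hscal a f) /\ app A (hscal a f) = hscal a (app A f)).

Definition densely_defined {H : PreHilbert} (A : Operator H) : Prop :=
  forall x eps, eps > 0 -> exists y, dom A y /\ hnorm (hsub x y) < eps.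

Definition closed_operator {H : PreHilbert} (A : Operator H) : Prop :=
  forall (u : nat -> H) x y, (forall n, dom A (u n)) ->
    hconverges u x -> hconverges (fun n => app A (u n)) y ->
    dom A x /\ app A x = y.

Definition adjoint_dom {H : PreHilbert} (A : Operator H) (g : H) : Prop :=
  exists h : H, forall f, dom A f -> inner (app A f) g = inner f h.

Definition shift {H : PreHilbert} (A : Operator H) (l : Cplx) : Operator H :=
  Build_Operator H (dom A) (fun f => hsub (app A f) (hscal l f)).

Definition range {H : PreHilbert} (A : Operator H) (y : H) : Prop :=
  exists f, dom A f /\ y = app A f.

Definition hclosed_set {H : PreHilbert} (S : H -> Prop) : Prop :=
  forall y, (forall eps, eps > 0 -> exists w, S w /\ hnorm (hsub y w) < eps) -> S y.

Fixpoint lin_comb {H : PreHilbert} (cs : list (Cplx * H)) : H :=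
  match cs with
  | nil => hzero
  | cons (a, v) t => hadd (hscal a v) (lin_comb t)
  end.

Definition kernel_finite_dim {H : PreHilbert} (A : Operator H) : Prop :=
  exists vs : list H, forall f, dom A f -> app A f = hzero ->
    exists cs : list Cplx, length cs = length vs /\ f = lin_comb (combine cs vs).

Definition cokernel_finite_dim {H : PreHilbert} (A : Operator H) : Prop :=
  exists vs : list H, forall h : H, exists r cs,
    range A r /\ length cs = length vs /\ h = hadd r (lin_comb (combine cs vs)).

Definition fredholm {H : PreHilbert} (A : Operator H) : Prop :=
  hclosed_set (range A) /\ kernel_finite_dim A /\ cokernel_finite_dim A.

Definition ess_spectrum {H : PreHilbert} (A : Operator H) (l : Cplx) : Prop :=
  ~ fredholm (shift A l).

Definition bounded_map {H : PreHilbert} (B : H -> H) : Prop :=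
  exists M, forall x, hnorm (B x) <= M * hnorm x.

Definition resolvent {H : PreHilbert} (A : Operator H) (l : Cplx) : Prop :=
  exists B : H -> H, bounded_map B /\
    (forall x, dom A (B x) /\ app (shift A l) (B x) = x) /\
    (forall f, dom A f -> B (app (shift A l) f) = f).

Definition spectrum {H : PreHilbert} (A : Operator H) (l : Cplx) : Prop :=
  ~ resolvent A l.

Definition Num {H : PreHilbert} (A : Operator H) (z : Cplx) : Prop :=
  exists f, dom A f /\ hnorm f = 1 /\ z = inner (app A f) f.

Definition Cclosure (S : Cplx -> Prop) (z : Cplx) : Prop :=
  forall eps, eps > 0 -> exists w, S w /\ Cabs (Csub z w) < eps.

Definition Cinterior (S : Cplx -> Prop) (z : Cplx) : Prop :=
  exists eps, eps > 0 /\ forall w, Cabs (Csub w z) < eps -> S w.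

Definition Cboundary (S : Cplx -> Prop) (z : Cplx) : Prop :=
  Cclosure S z /\ ~ Cinterior S z.

(* n (unit vector) is an inner normal of a supporting line of Om at l:
   Om lies in the half-plane { z | Re((z - l) conj n) >= 0 } *)
Definition supporting_normal (Om : Cplx -> Prop) (l n : Cplx) : Prop :=
  Cabs n = 1 /\ forall z, Om z -> Cre (Cmul (Csub z l) (Cconj n)) >= 0.

(* more than one supporting line through l (normals n and -n give the same line) *)
Definition corner_point (Om : Cplx -> Prop) (l : Cplx) : Prop :=
  exists n1 n2, supporting_normal Om l n1 /\ supporting_normal Om l n2 /\
    n1 <> n2 /\ n1 <> Copp n2.

(* n is the inner normal of the distinguished supporting line l_lambda:
   a supporting normal about which the (arc of) supporting normals is
   symmetric; m |-> n*n*conj m is the reflection across the direction n.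
   At a non-corner point this just says n is the (unique) supporting normal;
   at a corner point n is the axis of the smallest sector containing Om. *)
Definition l_normal (Om : Cplx -> Prop) (l n : Cplx) : Prop :=
  supporting_normal Om l n /\
  forall m, supporting_normal Om l m -> supporting_normal Om l (Cmul (Cmul n n) (Cconj m)).

(* coordinates (xi, eta) with origin l, xi-axis = l_lambda (direction i*n),
   eta-axis along the inner normal n *)
Definition xi_coord (l n z : Cplx) : R := Cre (Cmul (Csub z l) (Cconj (Cmul Ci n))).
Definition eta_coord (l n z : Cplx) : R := Cre (Cmul (Csub z l) (Cconj n)).

(* gamma_l^+(l) = infinity: the infimum of eta/xi^2 over Cboundary points in
   D'_eps with xi > 0 tends to +infinity as eps -> 0 *)
Definition gamma_l_plus_infinite (Om : Cplx -> Prop) (l n : Cplx) : Prop :=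
  forall M : R, exists eps, eps > 0 /\
    forall z, Cboundary Om z -> Cabs (Csub z l) <= eps -> xi_coord l n z > 0 ->
      eta_coord l n z / (xi_coord l n z * xi_coord l n z) >= M.

Definition gamma_l_minus_infinite (Om : Cplx -> Prop) (l n : Cplx) : Prop :=
  forall M : R, exists eps, eps > 0 /\
    forall z, Cboundary Om z -> Cabs (Csub z l) <= eps -> xi_coord l n z < 0 ->
      eta_coord l n z / (xi_coord l n z * xi_coord l n z) >= M.

Definition unilateral_infinite_curvature (Om : Cplx -> Prop) (l : Cplx) : Prop :=
  exists n, l_normal Om l n /\
    (gamma_l_plus_infinite Om l n \/ gamma_l_minus_infinite Om l n).

(* Let n be the inner normal at l and T := conj(n) (A - l).  Then T is closed, accretive
   (Num(A) lies on one side of the supporting line) and T + I is onto (l - n is outside the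
   closure of Num(A), hence in the resolvent set); the value <Tf, f> at a unit vector f is
   the point <Af, f> of Num(A) in the coordinates (eta, xi) centered at l.  Assume Ran T is
   closed, so that each g in Ran T has a preimage u with |u| <= L |g| (open mapping).
   - If <Tg, g> -> 0 along unit vectors g of Ran T, accretivity of g + s u forces
     <Tg, u> ~ -1, and then g + i t u has <T., .> ~ 2 i t up to O(t^2): points of Num(A)
     with eta = O(xi^2), contradicting the infinite curvature.
   - Otherwise the points of Num(A) near l come from Ker T, which is the orthogonal
     complement of Ran T.  Mixing a unit kernel vector with a unit g in Ran T gives all
     the values r <Tg, g>, 0 <= r <= 1; as l is not a corner, g can be chosen with
     <Tg, g> below any line through l, and the resulting segment again contradicts the
     infinite curvature. *)

From Stdlib Require Import Reals Lra Lia Psatz ClassicalEpsilon Classical.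
Open Scope R_scope.

Lemma Rabs_le_inv x a : Rabs x <= a -> - a <= x <= a.
Proof. intro h. unfold Rabs in h. destruct (Rcase_abs x); lra. Qed.

Lemma Cplx_ext z w : Cre z = Cre w -> Cim z = Cim w -> z = w.
Proof. destruct z, w; simpl; intros; subst; reflexivity. Qed.

Ltac Csolve :=
  apply Cplx_ext; unfold Cadd, Cmul, Copp, Csub, Cconj, C0, C1, Ci in *; simpl; ring.

Lemma Cconj_mul a b : Cconj (Cmul a b) = Cmul (Cconj a) (Cconj b). Proof. Csolve. Qed.
Lemma Cconj_add a b : Cconj (Cadd a b) = Cadd (Cconj a) (Cconj b). Proof. Csolve. Qed.

Definition Cnorm2 (z : Cplx) : R := Cre z * Cre z + Cim z * Cim z.
Definition RtoC (r : R) : Cplx := mkC r 0.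

Lemma Cnorm2_ge0 z : 0 <= Cnorm2 z. Proof. unfold Cnorm2; nra. Qed.
Lemma Cnorm2_mul a b : Cnorm2 (Cmul a b) = Cnorm2 a * Cnorm2 b.
Proof. unfold Cnorm2, Cmul; simpl; ring. Qed.

Lemma Cabs_ge0 z : 0 <= Cabs z. Proof. apply sqrt_pos. Qed.
Lemma Cabs_sqr z : Cabs z * Cabs z = Cnorm2 z. Proof. apply sqrt_sqrt, Cnorm2_ge0. Qed.
Lemma Cabs_mul a b : Cabs (Cmul a b) = Cabs a * Cabs b.
Proof. unfold Cabs; fold (Cnorm2 (Cmul a b)) (Cnorm2 a) (Cnorm2 b).
  rewrite Cnorm2_mul. apply sqrt_mult; apply Cnorm2_ge0. Qed.
Lemma Cabs_conj z : Cabs (Cconj z) = Cabs z.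
Proof. unfold Cabs, Cconj; simpl. f_equal; ring. Qed.
Lemma Cabs_opp z : Cabs (Copp z) = Cabs z.
Proof. unfold Cabs, Copp; simpl. f_equal; ring. Qed.
Lemma Cabs_RtoC r : Cabs (RtoC r) = Rabs r.
Proof. unfold Cabs, RtoC; simpl. replace (r * r + 0 * 0) with (Rsqr r) by (unfold Rsqr; ring).
  apply sqrt_Rsqr_abs. Qed.
Lemma Cabs_imag r : Cabs (mkC 0 r) = Rabs r.
Proof. rewrite <- (Cabs_RtoC r). unfold Cabs, RtoC; simpl. f_equal; ring. Qed.
Lemma Cabs_C1 : Cabs C1 = 1.
Proof. change C1 with (RtoC 1). rewrite Cabs_RtoC. apply Rabs_R1. Qed.
Lemma Cnorm2_unit n : Cabs n = 1 -> Cnorm2 n = 1.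
Proof. intro h. rewrite <- Cabs_sqr, h. ring. Qed.

Lemma Cabs_le_of_sqr z r : 0 <= r -> Cnorm2 z <= r * r -> Cabs z <= r.
Proof. intros hr h. pose proof (Cabs_sqr z); pose proof (Cabs_ge0 z). nra. Qed.

Lemma Cre_le_Cabs z : Rabs (Cre z) <= Cabs z.
Proof. pose proof (Cabs_sqr z); pose proof (Cabs_ge0 z). unfold Cnorm2 in *.
  apply Rabs_le; split; nra. Qed.
Lemma Cim_le_Cabs z : Rabs (Cim z) <= Cabs z.
Proof. pose proof (Cabs_sqr z); pose proof (Cabs_ge0 z). unfold Cnorm2 in *.
  apply Rabs_le; split; nra. Qed.
Lemma Cabs_le_Rabs_add z : Cabs z <= Rabs (Cre z) + Rabs (Cim z).
Proof. apply Cabs_le_of_sqr. pose proof (Rabs_pos (Cre z)); pose proof (Rabs_pos (Cim z)); lra.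
  unfold Cnorm2. pose proof (Rsqr_abs (Cre z)); pose proof (Rsqr_abs (Cim z)). unfold Rsqr in *.
  pose proof (Rabs_pos (Cre z)); pose proof (Rabs_pos (Cim z)). nra. Qed.

Lemma Cabs_triangle a b : Cabs (Cadd a b) <= Cabs a + Cabs b.
Proof.
  apply Cabs_le_of_sqr. pose proof (Cabs_ge0 a); pose proof (Cabs_ge0 b); lra.
  pose proof (Cabs_sqr a) as Ha; pose proof (Cabs_sqr b) as Hb.
  pose proof (Cabs_ge0 a); pose proof (Cabs_ge0 b).
  destruct a as [a1 a2], b as [b1 b2]. unfold Cnorm2, Cadd in *; simpl in *.
  assert (a1 * b1 + a2 * b2 <= Cabs (mkC a1 a2) * Cabs (mkC b1 b2)).
  { apply Rsqr_incr_0_var; [|apply Rmult_le_pos; assumption]. unfold Rsqr.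
    replace (Cabs (mkC a1 a2) * Cabs (mkC b1 b2) * (Cabs (mkC a1 a2) * Cabs (mkC b1 b2)))
      with ((Cabs (mkC a1 a2) * Cabs (mkC a1 a2)) * (Cabs (mkC b1 b2) * Cabs (mkC b1 b2))) by ring.
    rewrite Ha, Hb. pose proof (pow2_ge_0 (a1 * b2 - a2 * b1)). nra. }
  nra.
Qed.

Lemma Cmul_conj_unit n : Cabs n = 1 -> Cmul (Cconj n) n = C1.
Proof. intro h. apply Cnorm2_unit in h. unfold Cnorm2 in h. apply Cplx_ext; simpl; lra. Qed.
Lemma Cmul_unit_conj n : Cabs n = 1 -> Cmul n (Cconj n) = C1.
Proof. intro h. apply Cnorm2_unit in h. unfold Cnorm2 in h. apply Cplx_ext; simpl; lra. Qed.
Lemma Cabs_mul_conj_unit z n : Cabs n = 1 -> Cabs (Cmul z (Cconj n)) = Cabs z.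
Proof. intro h. rewrite Cabs_mul, Cabs_conj, h. ring. Qed.

Section InnerProductSpace.
Context {H : PreHilbert}.
Implicit Types x y z : H.

Lemma hadd_0l x : hadd hzero x = x.
Proof. rewrite hadd_comm. apply hadd_zero. Qed.

Lemma hadd_idem_eq0 x : hadd x x = x -> x = hzero.
Proof. intro e. transitivity (hadd (hadd x x) (hopp x)).
  - rewrite <- hadd_assoc, hadd_opp, hadd_zero. reflexivity.
  - rewrite e. apply hadd_opp. Qed.

Lemma hscal_0l x : hscal C0 x = hzero.
Proof. apply hadd_idem_eq0. rewrite <- hscal_addl. f_equal. Csolve. Qed.

Lemma hscal_0r a : hscal a (@hzero H) = hzero.
Proof. apply hadd_idem_eq0. rewrite <- hscal_addr, hadd_zero. reflexivity. Qed.

Lemma hopp_scal x : hopp x = hscal (Copp C1) x.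
Proof.
  assert (E : hadd x (hscal (Copp C1) x) = hzero).
  { rewrite <- (hscal_one H x) at 1. rewrite <- hscal_addl, <- (hscal_0l x). f_equal. Csolve. }
  rewrite <- (hadd_zero H (hopp x)), <- E, hadd_assoc, (hadd_comm H (hopp x)), hadd_opp.
  apply hadd_0l. Qed.

Lemma inner_addr x y z : inner x (hadd y z) = Cadd (inner x y) (inner x z).
Proof. rewrite inner_conj, inner_addl, Cconj_add, <- !inner_conj. reflexivity. Qed.

Lemma inner_scalr a x y : inner x (hscal a y) = Cmul (Cconj a) (inner x y).
Proof. rewrite inner_conj, inner_scall, Cconj_mul, <- inner_conj. reflexivity. Qed.

Lemma inner_0l y : inner hzero y = C0.
Proof. rewrite <- (hscal_0l hzero), inner_scall. Csolve. Qed.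
Lemma inner_0r y : inner y hzero = C0.
Proof. rewrite inner_conj, inner_0l. Csolve. Qed.

Lemma inner_oppl x y : inner (hopp x) y = Copp (inner x y).
Proof. rewrite hopp_scal, inner_scall. Csolve. Qed.
Lemma inner_oppr x y : inner x (hopp y) = Copp (inner x y).
Proof. rewrite hopp_scal, inner_scalr. Csolve. Qed.
Lemma inner_subl x y z : inner (hsub x y) z = Csub (inner x z) (inner y z).
Proof. unfold hsub. rewrite inner_addl, inner_oppl. reflexivity. Qed.
Lemma inner_subr x y z : inner z (hsub x y) = Csub (inner z x) (inner z y).
Proof. unfold hsub. rewrite inner_addr, inner_oppr. reflexivity. Qed.

Lemma inner_ext x y : (forall z, inner x z = inner y z) -> x = y.
Proof.
  intro h. assert (E : hsub x y = hzero).
  { apply inner_def. rewrite inner_subl, !inner_subr, !h. Csolve. }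
  rewrite <- (hadd_zero H x), <- (hadd_opp H y), hadd_assoc, (hadd_comm H x y), <- hadd_assoc.
  fold (hsub x y). rewrite E. apply hadd_zero. Qed.

Definition sqnorm x : R := Cre (inner x x).

Lemma sqnorm_ge0 x : 0 <= sqnorm x. Proof. apply inner_pos. Qed.
Lemma inner_self x : inner x x = RtoC (sqnorm x).
Proof. apply Cplx_ext; [reflexivity|].
  pose proof (f_equal Cim (inner_conj H x x)). unfold RtoC; simpl in *. lra. Qed.
Lemma sqnorm_eq0 x : sqnorm x = 0 -> x = hzero.
Proof. intro h. apply inner_def. rewrite inner_self, h. reflexivity. Qed.

Lemma sqnorm_add x y : sqnorm (hadd x y) = sqnorm x + sqnorm y + 2 * Cre (inner x y).
Proof. unfold sqnorm. rewrite inner_addl, !inner_addr, (inner_conj H x y). simpl. ring. Qed.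
Lemma sqnorm_sub x y : sqnorm (hsub x y) = sqnorm x + sqnorm y - 2 * Cre (inner x y).
Proof. unfold hsub. rewrite sqnorm_add, inner_oppr. unfold sqnorm.
  rewrite inner_oppl, inner_oppr. simpl. ring. Qed.
Lemma sqnorm_scal a x : sqnorm (hscal a x) = Cnorm2 a * sqnorm x.
Proof. unfold sqnorm. rewrite inner_scall, inner_scalr, inner_self. unfold Cnorm2; simpl. ring. Qed.

Lemma sqnorm_add_scal x y s :
  sqnorm (hadd x (hscal s y)) = sqnorm x + Cnorm2 s * sqnorm y + 2 * Cre (Cmul (Cconj s) (inner x y)).
Proof. rewrite sqnorm_add, sqnorm_scal, inner_scalr. reflexivity. Qed.

Lemma hnorm_ge0 x : 0 <= hnorm x. Proof. apply sqrt_pos. Qed.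
Lemma hnorm_sqr x : hnorm x * hnorm x = sqnorm x. Proof. apply sqrt_sqrt, sqnorm_ge0. Qed.
Lemma hnorm_scal a x : hnorm (hscal a x) = Cabs a * hnorm x.
Proof. unfold hnorm. fold (sqnorm (hscal a x)) (sqnorm x). rewrite sqnorm_scal.
  apply sqrt_mult. apply Cnorm2_ge0. apply sqnorm_ge0. Qed.
Lemma hnorm_eq0 x : hnorm x = 0 -> x = hzero.
Proof. intro h. apply sqnorm_eq0. rewrite <- hnorm_sqr, h. ring. Qed.
Lemma hnorm_zero : hnorm (@hzero H) = 0.
Proof. unfold hnorm. rewrite inner_0l. apply sqrt_0. Qed.
Lemma hnorm_le_of_sqr x r : 0 <= r -> sqnorm x <= r * r -> hnorm x <= r.
Proof. intros hr h. pose proof (hnorm_sqr x). pose proof (hnorm_ge0 x). nra. Qed.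

Lemma Cauchy_Schwarz x y : Cabs (inner x y) <= hnorm x * hnorm y.
Proof.
  apply Cabs_le_of_sqr. apply Rmult_le_pos; apply hnorm_ge0.
  replace (hnorm x * hnorm y * (hnorm x * hnorm y))
    with ((hnorm x * hnorm x) * (hnorm y * hnorm y)) by ring.
  rewrite !hnorm_sqr. destruct (Req_dec (sqnorm y) 0) as [h|h].
  { apply sqnorm_eq0 in h. subst y. unfold Cnorm2, sqnorm. rewrite inner_0r, inner_0l. simpl. lra. }
  pose proof (sqnorm_ge0 y).
  set (t := Cmul (inner x y) (RtoC (/ sqnorm y))).
  pose proof (sqnorm_ge0 (hsub x (hscal t y))) as P.
  rewrite sqnorm_sub, sqnorm_scal, inner_scalr in P.
  assert (Cnorm2 t * sqnorm y - 2 * Cre (Cmul (Cconj t) (inner x y))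
          = - (Cnorm2 (inner x y) / sqnorm y))
    by (unfold t, Cnorm2, RtoC; destruct (inner x y); simpl; field; lra).
  assert (Cnorm2 (inner x y) = Cnorm2 (inner x y) / sqnorm y * sqnorm y) by (field; lra).
  nra.
Qed.

Lemma hnorm_triangle x y : hnorm (hadd x y) <= hnorm x + hnorm y.
Proof.
  pose proof (hnorm_ge0 x); pose proof (hnorm_ge0 y).
  apply hnorm_le_of_sqr. lra.
  rewrite sqnorm_add, <- (hnorm_sqr x), <- (hnorm_sqr y).
  pose proof (Cre_le_Cabs (inner x y)); pose proof (Cauchy_Schwarz x y).
  pose proof (Rle_abs (Cre (inner x y))). nra. Qed.

End InnerProductSpace.

Ltac hsolve := apply inner_ext; intro;
  repeat rewrite ?inner_addl, ?inner_scall, ?inner_subl, ?inner_oppl, ?inner_0l; Csolve.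

Ltac hsolve_field := apply inner_ext; intro;
  repeat rewrite ?inner_addl, ?inner_scall, ?inner_subl, ?inner_oppl, ?inner_0l;
  apply Cplx_ext; unfold Cadd, Cmul, Copp, Csub, Cconj, C0, C1, Ci in *; simpl; field.

Section NormedSpace.
Context {H : PreHilbert}.
Implicit Types x y z : H.

Lemma hnorm_opp x : hnorm (hopp x) = hnorm x.
Proof. rewrite hopp_scal, hnorm_scal, Cabs_opp, Cabs_C1. ring. Qed.
Lemma hnorm_sub_le x y : hnorm (hsub x y) <= hnorm x + hnorm y.
Proof. unfold hsub. rewrite <- (hnorm_opp y). apply hnorm_triangle. Qed.
Lemma hnorm_sub_triangle x y z : hnorm (hsub x z) <= hnorm (hsub x y) + hnorm (hsub y z).
Proof. replace (hsub x z) with (hadd (hsub x y) (hsub y z)) by hsolve. apply hnorm_triangle. Qed.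
Lemma hnorm_sub_sym x y : hnorm (hsub x y) = hnorm (hsub y x).
Proof. replace (hsub y x) with (hscal (Copp C1) (hsub x y)) by hsolve.
  rewrite hnorm_scal, Cabs_opp, Cabs_C1. ring. Qed.

Lemma hnorm_normalize x : 0 < hnorm x -> hnorm (hscal (RtoC (/ hnorm x)) x) = 1.
Proof. intro h. rewrite hnorm_scal, Cabs_RtoC, Rabs_right. field; lra.
  left; apply Rinv_0_lt_compat; lra. Qed.

Lemma sqnorm_tilt_bounds x y s t C : hnorm x = 1 -> hnorm y <= C -> 0 <= t -> t * C <= / 4 ->
  Cabs s = t -> / 2 <= sqnorm (hadd x (hscal s y)) <= 2.
Proof.
  intros hx hy ht htC hs. rewrite sqnorm_add_scal, <- (hnorm_sqr x), hx, <- (hnorm_sqr y), <- Cabs_sqr, hs.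
  pose proof (Cre_le_Cabs (Cmul (Cconj s) (inner x y))) as hre.
  rewrite Cabs_mul, Cabs_conj, hs in hre. apply Rabs_le_inv in hre.
  pose proof (Cauchy_Schwarz x y) as hcs. rewrite hx in hcs. pose proof (hnorm_ge0 y).
  assert (t * Cabs (inner x y) <= t * C) by (apply Rmult_le_compat_l; lra).
  assert (hty : 0 <= t * hnorm y <= t * C) by (split; [apply Rmult_le_pos | apply Rmult_le_compat_l]; lra).
  assert (0 <= t * t * (hnorm y * hnorm y) <= (t * C) * (t * C)) by (split; nra).
  nra.
Qed.

End NormedSpace.

Lemma choice_fun {A T : Type} (P : A -> T -> Prop) :
  (forall a, exists t, P a t) -> exists f : A -> T, forall a, P a (f a).
Proof. intro h. exists (fun a => proj1_sig (constructive_indefinite_description _ (h a))).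
  intro a. exact (proj2_sig (constructive_indefinite_description _ (h a))). Qed.

Lemma pow_lt_eventually q e : 0 <= q < 1 -> 0 < e -> exists N, forall n, (N <= n)%nat -> q ^ n < e.
Proof. intros hq he. destruct (pow_lt_1_zero q ltac:(rewrite Rabs_right; lra) e he) as [N hN].
  exists N. intros n hn. specialize (hN n hn). rewrite Rabs_right in hN by (apply Rle_ge, pow_le; lra).
  exact hN. Qed.

Section Convergence.
Context {H : PreHilbert}.
Implicit Types x y z : H.

Lemma hconverges_add (u v : nat -> H) x y : hconverges u x -> hconverges v y ->
  hconverges (fun k => hadd (u k) (v k)) (hadd x y).
Proof.
  intros hu hv e he. destruct (hu (e / 2)) as [N1 h1]; [lra|]. destruct (hv (e / 2)) as [N2 h2]; [lra|].
  exists (max N1 N2). intros k hk. specialize (h1 k ltac:(lia)). specialize (h2 k ltac:(lia)).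
  replace (hsub (hadd (u k) (v k)) (hadd x y)) with (hadd (hsub (u k) x) (hsub (v k) y)) by hsolve.
  pose proof (hnorm_triangle (hsub (u k) x) (hsub (v k) y)). lra. Qed.

Lemma hconverges_scal (u : nat -> H) x a : hconverges u x ->
  hconverges (fun k => hscal a (u k)) (hscal a x).
Proof.
  intros hu e he. pose proof (Cabs_ge0 a).
  destruct (hu (e / (Cabs a + 1))) as [N h]. { apply Rdiv_lt_0_compat; lra. }
  exists N. intros k hk. specialize (h k hk).
  replace (hsub (hscal a (u k)) (hscal a x)) with (hscal a (hsub (u k) x)) by hsolve.
  rewrite hnorm_scal. pose proof (hnorm_ge0 (hsub (u k) x)).
  apply Rle_lt_trans with ((Cabs a + 1) * hnorm (hsub (u k) x)); [nra|].
  replace e with ((Cabs a + 1) * (e / (Cabs a + 1))) by (field; lra).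
  apply Rmult_lt_compat_l; lra. Qed.

Lemma hconverges_ext (u v : nat -> H) x : (forall k, u k = v k) -> hconverges u x -> hconverges v x.
Proof. intros e hu eps he. destruct (hu eps he) as [N h]. exists N. intros k hk. rewrite <- e. auto. Qed.

Lemma hnorm_sub_limit_le (u : nat -> H) x c r N : hconverges u x ->
  (forall k, (N <= k)%nat -> hnorm (hsub (u k) c) <= r) -> hnorm (hsub x c) <= r.
Proof.
  intros hu hb. apply Rnot_lt_le. intro hlt.
  destruct (hu (hnorm (hsub x c) - r)) as [M hM]; [lra|].
  specialize (hM (max N M) ltac:(lia)). specialize (hb (max N M) ltac:(lia)).
  pose proof (hnorm_sub_triangle x (u (max N M)) c). rewrite hnorm_sub_sym in hM. lra. Qed.

Lemma hclosed_set_limit (P : H -> Prop) (u : nat -> H) x :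
  hclosed_set P -> (forall k, P (u k)) -> hconverges u x -> P x.
Proof. intros hP hu hc. apply hP. intros e he. destruct (hc e he) as [N hN]. exists (u N).
  split; auto. rewrite hnorm_sub_sym. apply hN. lia. Qed.

Lemma geometric_tail_bound (u : nat -> H) C q : 0 <= q < 1 ->
  (forall k, hnorm (hsub (u (S k)) (u k)) <= C * q ^ k) ->
  forall m j, hnorm (hsub (u (m + j)%nat) (u m)) <= C * q ^ m / (1 - q).
Proof.
  intros hq hinc m j.
  assert (hC : 0 <= C) by (pose proof (hinc 0%nat); pose proof (hnorm_ge0 (hsub (u 1%nat) (u 0%nat))); simpl in *; lra).
  assert (hqm : 0 <= q ^ m) by (apply pow_le; lra).
  enough (hfin : hnorm (hsub (u (m + j)%nat) (u m)) <= C * q ^ m * (1 - q ^ j) / (1 - q)).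
  { apply Rle_trans with (1 := hfin). unfold Rdiv. apply Rmult_le_compat_r; [apply Rlt_le, Rinv_0_lt_compat; lra|].
    assert (q ^ j <= 1) by (rewrite <- (pow1 j); apply pow_incr; lra).
    pose proof (pow_le q j ltac:(lra)). assert (0 <= C * q ^ m) by (apply Rmult_le_pos; lra). nra. }
  induction j.
  - rewrite Nat.add_0_r. replace (hsub (u m) (u m)) with (@hzero H) by hsolve.
    rewrite hnorm_zero. simpl. unfold Rdiv. rewrite Rminus_diag, Rmult_0_r, !Rmult_0_l. lra.
  - rewrite Nat.add_succ_r. specialize (hinc (m + j)%nat). rewrite pow_add in hinc.
    pose proof (hnorm_sub_triangle (u (S (m + j))) (u (m + j)%nat) (u m)).
    replace (C * q ^ m * (1 - q ^ S j) / (1 - q)) with (C * q ^ m * (1 - q ^ j) / (1 - q) + C * (q ^ m * q ^ j))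
      by (simpl; field; lra).
    lra.
Qed.

Lemma hcauchy_of_geometric (u : nat -> H) C q : 0 <= q < 1 ->
  (forall k, hnorm (hsub (u (S k)) (u k)) <= C * q ^ k) -> hcauchy u.
Proof.
  intros hq hinc e he. pose proof (geometric_tail_bound u C q hq hinc) as htail.
  assert (hC : 0 <= C) by (pose proof (hinc 0%nat); pose proof (hnorm_ge0 (hsub (u 1%nat) (u 0%nat))); simpl in *; lra).
  destruct (pow_lt_eventually q (e * (1 - q) / (2 * C + 1)) hq) as [N hN].
  { apply Rdiv_lt_0_compat; nra. }
  exists N. intros m n hm hn. specialize (hN N (le_n _)).
  pose proof (htail N (m - N)%nat) as h1. pose proof (htail N (n - N)%nat) as h2.
  replace (N + (m - N))%nat with m in h1 by lia. replace (N + (n - N))%nat with n in h2 by lia.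
  pose proof (hnorm_sub_triangle (u m) (u N) (u n)) as htri. rewrite (hnorm_sub_sym (u N) (u n)) in htri.
  assert (C * q ^ N / (1 - q) < e / 2).
  { apply (Rmult_lt_reg_r (1 - q)); [lra|]. unfold Rdiv. rewrite Rmult_assoc, Rinv_l, Rmult_1_r by lra.
    apply Rle_lt_trans with (C * (e * (1 - q) / (2 * C + 1))). { apply Rmult_le_compat_l; lra. }
    apply (Rmult_lt_reg_r (2 * C + 1)); [lra|]. field_simplify; nra. }
  lra.
Qed.

End Convergence.

(** * Orthogonal projection onto a closed subspace *)

Section Projection.
Context {H : Hilbert}.
Variable K : H -> Prop.
Hypothesis K0 : K hzero.
Hypothesis Kadd : forall x y, K x -> K y -> K (hadd x y).
Hypothesis Kscal : forall a x, K x -> K (hscal a x).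
Hypothesis Kclosed : hclosed_set K.

Lemma parallelogram (a b : H) : sqnorm (hsub a b) + sqnorm (hadd a b) = 2 * sqnorm a + 2 * sqnorm b.
Proof. rewrite sqnorm_sub, sqnorm_add. ring. Qed.

Lemma sqdist_infimum (x : H) : exists d, (forall k, K k -> d <= sqnorm (hsub x k)) /\
  forall e, 0 < e -> exists k, K k /\ sqnorm (hsub x k) < d + e.
Proof.
  destruct (completeness (fun r => exists k, K k /\ r = - sqnorm (hsub x k))) as [m [hub hlub]].
  - exists 0. intros r [k [_ ->]]. pose proof (sqnorm_ge0 (hsub x k)). lra.
  - exists (- sqnorm (hsub x hzero)). exists hzero. auto.
  - exists (- m). split.
    + intros k hk. assert (- sqnorm (hsub x k) <= m) by (apply hub; exists k; auto). lra.
    + intros e he. apply NNPP. intro hn.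
      enough (m <= m - e) by lra. apply hlub. intros r [k [hk ->]].
      apply Rnot_lt_le. intro. apply hn. exists k. split; auto. lra.
Qed.

Lemma near_minimizers_close (x k1 k2 : H) d e1 e2 : (forall k, K k -> d <= sqnorm (hsub x k)) ->
  K k1 -> K k2 -> sqnorm (hsub x k1) < d + e1 -> sqnorm (hsub x k2) < d + e2 ->
  sqnorm (hsub k1 k2) <= 2 * e1 + 2 * e2.
Proof.
  intros hlow h1 h2 hd1 hd2.
  assert (hmid := hlow (hscal (RtoC (/ 2)) (hadd k1 k2)) ltac:(apply Kscal, Kadd; auto)).
  pose proof (parallelogram (hsub x k2) (hsub x k1)) as hp.
  replace (hsub (hsub x k2) (hsub x k1)) with (hsub k1 k2) in hp by hsolve.
  replace (hadd (hsub x k2) (hsub x k1)) with (hscal (RtoC 2) (hsub x (hscal (RtoC (/ 2)) (hadd k1 k2))))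
    in hp by (unfold RtoC; hsolve_field).
  rewrite sqnorm_scal in hp.
  replace (Cnorm2 (RtoC 2)) with 4 in hp by (unfold Cnorm2, RtoC; simpl; ring). lra.
Qed.

Lemma best_approximation (x : H) : exists p, K p /\ forall k, K k -> sqnorm (hsub x p) <= sqnorm (hsub x k).
Proof.
  destruct (sqdist_infimum x) as [d [hlow hnear]].
  destruct (choice_fun (fun j k => K k /\ sqnorm (hsub x k) < d + (/ 4) ^ j)) as [ks hks].
  { intro j. apply hnear, pow_lt. lra. }
  assert (hinc : forall j, hnorm (hsub (ks (S j)) (ks j)) <= 2 * (/ 2) ^ j).
  { intro j. destruct (hks j) as [hj hdj]. destruct (hks (S j)) as [hSj hdSj].
    pose proof (near_minimizers_close x _ _ d _ _ hlow hSj hj hdSj hdj) as hclose.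
    assert (e : (/ 4) ^ j = (/ 2) ^ j * (/ 2) ^ j) by (rewrite <- Rpow_mult_distr; f_equal; lra).
    simpl in hclose. rewrite e in hclose. pose proof (pow_le (/ 2) j ltac:(lra)).
    apply hnorm_le_of_sqr; nra. }
  destruct (complete H ks (hcauchy_of_geometric ks 2 (/ 2) ltac:(lra) hinc)) as [p hp].
  assert (hpK : K p) by (apply (hclosed_set_limit K ks p Kclosed); [apply hks | exact hp]).
  exists p. split; auto.
  intros k hk. apply Rle_trans with d; [|apply hlow, hk].
  apply Rle_plus_epsilon. intros e he.
  destruct (pow_lt_eventually (/ 4) e ltac:(lra) he) as [N hN].
  assert (hde : 0 <= d + e) by (destruct (hks N) as [_ hN2]; pose proof (hN N (le_n _)); pose proof (sqnorm_ge0 (hsub x (ks N))); lra).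
  assert (hb : hnorm (hsub p x) <= sqrt (d + e)).
  { apply (hnorm_sub_limit_le ks p x _ N hp). intros j hj.
    rewrite hnorm_sub_sym. apply sqrt_le_1_alt. destruct (hks j) as [_ hj']. specialize (hN j hj).
    unfold sqnorm in hj'. lra. }
  rewrite hnorm_sub_sym in hb. rewrite <- hnorm_sqr.
  pose proof (hnorm_ge0 (hsub x p)). pose proof (sqrt_sqrt (d + e) hde). nra.
Qed.

Lemma Cplx_eq0_of_quadratic_bound c a : 0 <= a ->
  (forall s, 2 * Cre (Cmul (Cconj s) c) <= Cnorm2 s * a) -> c = C0.
Proof.
  intros ha h. set (t := / (a + 1)).
  assert (ht : 0 < t) by (apply Rinv_0_lt_compat; lra).
  assert (hta : t * a < 1) by (unfold t; apply (Rmult_lt_reg_r (a + 1)); [lra | field_simplify; lra]).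
  specialize (h (Cmul (RtoC t) c)).
  replace (Cre (Cmul (Cconj (Cmul (RtoC t) c)) c)) with (t * Cnorm2 c) in h
    by (unfold Cnorm2, RtoC; simpl; ring).
  rewrite Cnorm2_mul in h. replace (Cnorm2 (RtoC t)) with (t * t) in h by (unfold Cnorm2, RtoC; simpl; ring).
  pose proof (Cnorm2_ge0 c).
  assert (t * a * (t * Cnorm2 c) <= 1 * (t * Cnorm2 c)) by (apply Rmult_le_compat_r; nra).
  assert (hc : Cnorm2 c <= 0) by nra.
  destruct c as [c1 c2]. unfold Cnorm2 in hc; simpl in hc. apply Cplx_ext; simpl; nra.
Qed.

Lemma orthogonal_projection (x : H) : exists p, K p /\ forall k, K k -> inner (hsub x p) k = C0.
Proof.
  destruct (best_approximation x) as [p [hp hmin]]. exists p. split; auto.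
  intros k hk. apply (Cplx_eq0_of_quadratic_bound _ (sqnorm k) (sqnorm_ge0 k)). intro s.
  specialize (hmin (hadd p (hscal s k)) ltac:(apply Kadd, Kscal; auto)).
  replace (hsub x (hadd p (hscal s k))) with (hsub (hsub x p) (hscal s k)) in hmin by hsolve.
  rewrite (sqnorm_sub (hsub x p)), sqnorm_scal, inner_scalr in hmin. lra.
Qed.

End Projection.

(** * Baire category *)

Section Baire.
Context {H : Hilbert}.

Lemma nested_balls_limit (c : nat -> H) (r : nat -> R) :
  (forall n, 0 < r n) -> (forall n, r (S n) <= r n / 4) ->
  (forall n, hnorm (hsub (c (S n)) (c n)) < r n / 2) ->
  exists x, hconverges c x /\ forall n, hnorm (hsub x (c n)) <= r n.
Proof.
  intros hpos hshrink hstep.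
  assert (hdecay : forall m k, r (m + k)%nat <= r m * (/ 4) ^ k).
  { intros m k. induction k; simpl. { rewrite Nat.add_0_r. lra. }
    rewrite Nat.add_succ_r. specialize (hshrink (m + k)%nat). lra. }
  assert (hinc : forall m k, hnorm (hsub (c (m + S k)%nat) (c (m + k)%nat)) <= r m / 2 * (/ 4) ^ k).
  { intros m k. rewrite Nat.add_succ_r. specialize (hstep (m + k)%nat). specialize (hdecay m k). lra. }
  assert (htail : forall m j, hnorm (hsub (c (m + j)%nat) (c m)) <= r m * (2 / 3)).
  { intros m j. pose proof (geometric_tail_bound (fun k => c (m + k)%nat) (r m / 2) (/ 4) ltac:(lra)) as h.
    specialize (h (hinc m) 0%nat j).
    simpl in h. rewrite Nat.add_0_r in h. lra. }
  destruct (complete H c (hcauchy_of_geometric c (r 0%nat / 2) (/ 4) ltac:(lra) (hinc 0%nat))) as [x hx].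
  exists x. split; auto. intro m.
  apply (hnorm_sub_limit_le c x (c m) (r m) m hx). intros k hk.
  specialize (htail m (k - m)%nat). replace (m + (k - m))%nat with k in htail by lia.
  pose proof (hpos m). lra.
Qed.

Lemma baire_category (P : H -> Prop) (E : nat -> H -> Prop) :
  hclosed_set P -> (exists y, P y) -> (forall y, P y -> exists N, E N y) ->
  (forall N y, ~ E N y -> exists e, 0 < e /\ forall y', hnorm (hsub y' y) < e -> ~ E N y') ->
  exists N y0 rho, 0 < rho /\ P y0 /\ forall y, P y -> hnorm (hsub y y0) < rho -> E N y.
Proof.
  intros hP [yP hyP] hcover hopen. apply NNPP. intro hneg.
  destruct (choice_fun (fun (Nb : nat * (H * R)) b' => P (fst (snd Nb)) /\ 0 < snd (snd Nb) ->
     P (fst b') /\ 0 < snd b' /\ snd b' <= snd (snd Nb) / 4 /\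
     hnorm (hsub (fst b') (fst (snd Nb))) < snd (snd Nb) / 2 /\
     forall y', hnorm (hsub y' (fst b')) <= snd b' -> ~ E (fst Nb) y')) as [F hF].
  { intros [N [y0 rho]]. simpl. destruct (classic (P y0 /\ 0 < rho)) as [[hy0 hr] | hc].
    2: { exists (y0, rho). intro; contradiction. }
    assert (hbad : exists y, P y /\ hnorm (hsub y y0) < rho / 2 /\ ~ E N y).
    { apply NNPP. intro hno. apply hneg. exists N, y0, (rho / 2). split; [lra|]. split; auto.
      intros y hy hd. apply NNPP. intro. apply hno. eauto. }
    destruct hbad as [y [hy [hd hE]]]. destruct (hopen N y hE) as [e [he hball]].
    exists (y, Rmin (e / 2) (rho / 4)). intros _. simpl.
    pose proof (Rmin_l (e / 2) (rho / 4)). pose proof (Rmin_r (e / 2) (rho / 4)).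
    repeat split; auto. { apply Rmin_glb_lt; lra. }
    intros y' hy'. apply hball. lra. }
  set (g := fun n => nat_rect (fun _ => (H * R)%type) (yP, 1) (fun n b => F (n, b)) n).
  assert (ginv : forall n, P (fst (g n)) /\ 0 < snd (g n)).
  { induction n; simpl. { split; auto; lra. } destruct (hF (n, g n) IHn) as [? [? _]]. auto. }
  destruct (nested_balls_limit (fun n => fst (g n)) (fun n => snd (g n))) as [x [hx hxball]].
  { intro n. apply ginv. }
  { intro n. apply (hF (n, g n) (ginv n)). }
  { intro n. apply (hF (n, g n) (ginv n)). }
  destruct (hcover x (hclosed_set_limit P _ x hP (fun n => proj1 (ginv n)) hx)) as [N hN].
  apply (proj2 (proj2 (proj2 (proj2 (hF (N, g N) (ginv N))))) x); auto.
  apply (hxball (S N)).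
Qed.

End Baire.

(** * Linear operators and the open mapping theorem *)

Section LinearOperator.
Context {H : PreHilbert}.
Variable T : Operator H.
Hypothesis T_linear : linear_operator T.

Lemma dom_zero : dom T hzero. Proof. apply T_linear. Qed.
Lemma dom_add f g : dom T f -> dom T g -> dom T (hadd f g). Proof. apply T_linear. Qed.
Lemma dom_scal a f : dom T f -> dom T (hscal a f). Proof. apply T_linear. Qed.
Lemma app_add f g : dom T f -> dom T g -> app T (hadd f g) = hadd (app T f) (app T g).
Proof. apply T_linear. Qed.
Lemma app_scal a f : dom T f -> app T (hscal a f) = hscal a (app T f).
Proof. apply T_linear. Qed.

Lemma app_zero : app T hzero = hzero.
Proof. rewrite <- (hscal_0l (@hzero H)) at 1. rewrite app_scal by apply dom_zero. apply hscal_0l. Qed.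

Lemma dom_sub f g : dom T f -> dom T g -> dom T (hsub f g).
Proof. intros hf hg. unfold hsub. rewrite hopp_scal. apply dom_add, dom_scal; auto. Qed.
Lemma app_sub f g : dom T f -> dom T g -> app T (hsub f g) = hsub (app T f) (app T g).
Proof. intros hf hg. unfold hsub. rewrite !hopp_scal, app_add, app_scal; auto using dom_scal. Qed.

Lemma range_app f : dom T f -> range T (app T f). Proof. intro h. exists f. auto. Qed.
Lemma range_zero : range T hzero. Proof. exists hzero. rewrite app_zero. split; auto using dom_zero. Qed.
Lemma range_add x y : range T x -> range T y -> range T (hadd x y).
Proof. intros [f [hf ->]] [g [hg ->]]. exists (hadd f g). rewrite app_add; auto using dom_add. Qed.
Lemma range_scal a x : range T x -> range T (hscal a x).
Proof. intros [f [hf ->]]. exists (hscal a f). rewrite app_scal; auto using dom_scal. Qed.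
Lemma range_sub x y : range T x -> range T y -> range T (hsub x y).
Proof. intros hx hy. unfold hsub. rewrite hopp_scal. apply range_add, range_scal; auto. Qed.

End LinearOperator.

Section ClosedRange.
Context {H : Hilbert}.
Variable T : Operator H.
Hypothesis T_linear : linear_operator T.
Hypothesis T_closed : closed_operator T.
Hypothesis T_range_closed : hclosed_set (range T).

Definition approx_image (N : nat) (y : H) : Prop :=
  forall e, 0 < e -> exists u, dom T u /\ hnorm u <= INR N /\ hnorm (hsub y (app T u)) < e.

Lemma range_approx_image y : range T y -> exists N, approx_image N y.
Proof.
  intros [f [hf ->]]. destruct (INR_archimed 1 (hnorm f)) as [N hN]; [lra|].
  exists N. intros e he. exists f. repeat split; auto; [lra|].
  replace (hsub (app T f) (app T f)) with (@hzero H) by hsolve. rewrite hnorm_zero. lra.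
Qed.

Lemma not_approx_image_open N y : ~ approx_image N y ->
  exists e, 0 < e /\ forall y', hnorm (hsub y' y) < e -> ~ approx_image N y'.
Proof.
  intro hy. assert (he : exists e, 0 < e /\ forall u, dom T u -> hnorm u <= INR N -> e <= hnorm (hsub y (app T u))).
  { apply NNPP. intro hno. apply hy. intros e he. apply NNPP. intro hno'. apply hno.
    exists e. split; auto. intros u hu hun. apply Rnot_lt_le. intro. apply hno'. eauto. }
  destruct he as [e [he hfar]]. exists (e / 2). split; [lra|].
  intros y' hy' happ. destruct (happ (e / 2) ltac:(lra)) as [u [hu [hun hclose]]].
  specialize (hfar u hu hun). pose proof (hnorm_sub_triangle y y' (app T u)).
  rewrite hnorm_sub_sym in hy'. lra.
Qed.

Lemma small_range_approx : exists rho N, 0 < rho /\ forall y, range T y -> hnorm y < rho ->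
  forall e, 0 < e -> exists u, dom T u /\ hnorm u <= 2 * INR N /\ hnorm (hsub y (app T u)) < e.
Proof.
  destruct (baire_category (range T) approx_image T_range_closed (ex_intro _ _ (range_zero T T_linear))
    range_approx_image not_approx_image_open) as [N [y0 [rho [hrho [hy0 hball]]]]].
  exists rho, N. split; auto. intros y hy hny e he.
  (* approximate y as the difference of y0 + y and y0, both in the ball *)
  assert (h0 := hball y0 hy0). assert (h1 := hball (hadd y0 y) (range_add T T_linear _ _ hy0 hy)).
  replace (hsub y0 y0) with (@hzero H) in h0 by hsolve. rewrite hnorm_zero in h0.
  replace (hsub (hadd y0 y) y0) with y in h1 by hsolve.
  destruct (h0 hrho (e / 2) ltac:(lra)) as [u0 [hu0 [hn0 he0]]].
  destruct (h1 hny (e / 2) ltac:(lra)) as [u1 [hu1 [hn1 he1]]].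
  exists (hsub u1 u0). split; [apply dom_sub; auto|]. split.
  { pose proof (hnorm_sub_le u1 u0). lra. }
  rewrite app_sub by auto.
  replace (hsub y (hsub (app T u1) (app T u0))) with (hsub (hsub (hadd y0 y) (app T u1)) (hsub y0 (app T u0)))
    by hsolve.
  pose proof (hnorm_sub_le (hsub (hadd y0 y) (app T u1)) (hsub y0 (app T u0))). lra.
Qed.

Lemma range_half_approx : exists L, 0 <= L /\ forall y, range T y ->
  exists u, dom T u /\ hnorm u <= L * hnorm y /\ hnorm (hsub y (app T u)) <= hnorm y / 2.
Proof.
  destruct small_range_approx as [rho [N [hrho happ]]]. pose proof (pos_INR N).
  exists (4 * INR N / rho). split. { apply Rmult_le_pos; [lra | apply Rlt_le, Rinv_0_lt_compat; lra]. }
  intros y hy. pose proof (hnorm_ge0 y). destruct (Req_dec (hnorm y) 0) as [h0|h0].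
  { apply hnorm_eq0 in h0. subst y. exists hzero. rewrite app_zero by auto.
    replace (hsub hzero hzero) with (@hzero H) by hsolve. rewrite hnorm_zero. repeat split; auto using dom_zero; lra. }
  (* rescale y to norm rho / 2, approximate, and scale back *)
  set (c := rho / (2 * hnorm y)). assert (hc : 0 < c) by (unfold c; apply Rdiv_lt_0_compat; lra).
  destruct (happ (hscal (RtoC c) y) (range_scal T T_linear _ _ hy)) with (e := rho / 4)
    as [u [hu [hun hue]]]; [|lra|].
  { rewrite hnorm_scal, Cabs_RtoC, Rabs_right by lra. unfold c. field_simplify; lra. }
  exists (hscal (RtoC (/ c)) u).
  assert (0 < / c) by (apply Rinv_0_lt_compat; lra).
  assert (hic : Cabs (RtoC (/ c)) = / c) by (rewrite Cabs_RtoC; apply Rabs_right; lra).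
  split; [apply dom_scal; auto|]. split.
  - rewrite hnorm_scal, hic. replace (4 * INR N / rho * hnorm y) with (/ c * (2 * INR N)) by (unfold c; field; lra).
    apply Rmult_le_compat_l; lra.
  - rewrite app_scal by auto.
    replace (hsub y (hscal (RtoC (/ c)) (app T u))) with (hscal (RtoC (/ c)) (hsub (hscal (RtoC c) y) (app T u)))
      by (unfold RtoC; hsolve_field; lra).
    rewrite hnorm_scal, hic. replace (hnorm y / 2) with (/ c * (rho / 4)) by (unfold c; field; lra).
    apply Rmult_le_compat_l; lra.
Qed.

Lemma half_approx_sequence L y : 0 <= L -> (forall r, range T r ->
    exists u, dom T u /\ hnorm u <= L * hnorm r /\ hnorm (hsub r (app T u)) <= hnorm r / 2) ->
  range T y -> exists U : nat -> H, U 0%nat = hzero /\ forall m, dom T (U m) /\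
    hnorm (hsub y (app T (U m))) <= (/ 2) ^ m * hnorm y /\
    hnorm (hsub (U (S m)) (U m)) <= L * hnorm y * (/ 2) ^ m.
Proof.
  intros hL happ hy.
  destruct (choice_fun (fun r u => range T r ->
    dom T u /\ hnorm u <= L * hnorm r /\ hnorm (hsub r (app T u)) <= hnorm r / 2)) as [G hG].
  { intro r. destruct (classic (range T r)) as [h|h].
    - destruct (happ r h) as [u hu]. exists u. auto.
    - exists hzero. contradiction. }
  set (U := fun m => nat_rect (fun _ => H) hzero (fun _ V => hadd V (G (hsub y (app T V)))) m).
  assert (hres : forall m, dom T (U m) -> range T (hsub y (app T (U m)))).
  { intros m hm. apply range_sub; auto using range_app. }
  assert (hinv : forall m, dom T (U m) /\ hnorm (hsub y (app T (U m))) <= (/ 2) ^ m * hnorm y).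
  { induction m as [|m [hD hn]].
    - simpl. replace (hsub y (app T hzero)) with y by (rewrite app_zero by auto; hsolve).
      split; [apply dom_zero; auto | lra].
    - destruct (hG _ (hres m hD)) as [hDu [_ hres']].
      change (U (S m)) with (hadd (U m) (G (hsub y (app T (U m))))).
      split; [apply dom_add; auto|]. rewrite app_add by auto.
      replace (hsub y (hadd (app T (U m)) (app T (G (hsub y (app T (U m)))))))
        with (hsub (hsub y (app T (U m))) (app T (G (hsub y (app T (U m)))))) by hsolve.
      simpl. lra. }
  exists U. split; [reflexivity|]. intro m. destruct (hinv m) as [hD hn]. repeat split; auto.
  destruct (hG _ (hres m hD)) as [_ [hnu _]].
  change (U (S m)) with (hadd (U m) (G (hsub y (app T (U m))))).
  replace (hsub (hadd (U m) (G (hsub y (app T (U m))))) (U m)) with (G (hsub y (app T (U m)))) by hsolve.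
  apply Rle_trans with (1 := hnu). pose proof (hnorm_ge0 (hsub y (app T (U m)))).
  replace (L * hnorm y * (/ 2) ^ m) with (L * ((/ 2) ^ m * hnorm y)) by ring.
  apply Rmult_le_compat_l; auto.
Qed.

Lemma closed_range_preimage_bound : exists L, 0 < L /\ forall y, range T y ->
  exists u, dom T u /\ app T u = y /\ hnorm u <= L * hnorm y.
Proof.
  destruct range_half_approx as [L [hL happ]].
  exists (2 * L + 1). split; [lra|]. intros y hy. pose proof (hnorm_ge0 y).
  destruct (half_approx_sequence L y hL happ hy) as [U [hU0 hU]].
  assert (hinc : forall m, hnorm (hsub (U (S m)) (U m)) <= L * hnorm y * (/ 2) ^ m) by apply hU.
  destruct (complete H U (hcauchy_of_geometric U _ (/ 2) ltac:(lra) hinc)) as [x hx].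
  assert (hTx : hconverges (fun k => app T (U k)) y).
  { intros e he. destruct (pow_lt_eventually (/ 2) (e / (hnorm y + 1)) ltac:(lra)) as [N hN].
    { apply Rdiv_lt_0_compat; lra. }
    exists N. intros k hk. specialize (hN k hk). destruct (hU k) as [_ [hn _]]. rewrite hnorm_sub_sym.
    apply Rle_lt_trans with (1 := hn). pose proof (pow_le (/ 2) k ltac:(lra)).
    apply Rle_lt_trans with ((/ 2) ^ k * (hnorm y + 1)); [nra|].
    replace e with (e / (hnorm y + 1) * (hnorm y + 1)) by (field; lra). apply Rmult_lt_compat_r; lra. }
  destruct (T_closed U x y (fun k => proj1 (hU k)) hx hTx) as [hDx hTxy].
  exists x. repeat split; auto.
  assert (hbound : hnorm (hsub x (U 0%nat)) <= L * hnorm y * (/ 2) ^ 0 / (1 - / 2)).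
  { apply (hnorm_sub_limit_le U x _ _ 0 hx). intros k _.
    apply (geometric_tail_bound U _ (/ 2) ltac:(lra) hinc 0 k). }
  rewrite hU0 in hbound. replace (hsub x hzero) with x in hbound by hsolve. simpl in hbound. nra.
Qed.

End ClosedRange.

(** * m-accretive operators with closed range and an infinitely curved form *)

Definition qform {H : PreHilbert} (T : Operator H) (f : H) : Cplx := inner (app T f) f.

Section QuadraticForm.
Context {H : PreHilbert}.
Variable T : Operator H.
Hypothesis T_linear : linear_operator T.

Lemma qform_scal_real c v : dom T v -> qform T (hscal (RtoC c) v) = Cmul (RtoC (c * c)) (qform T v).
Proof. intro hv. unfold qform. rewrite app_scal, inner_scall, inner_scalr by auto.
  destruct (inner (app T v) v). unfold RtoC; Csolve. Qed.

Lemma qform_normalize v : dom T v -> 0 < hnorm v ->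
  let v' := hscal (RtoC (/ hnorm v)) v in
  dom T v' /\ hnorm v' = 1 /\ qform T v' = Cmul (RtoC (/ sqnorm v)) (qform T v).
Proof.
  intros hv hn v'. repeat split.
  - apply dom_scal; auto.
  - apply hnorm_normalize; auto.
  - unfold v'. rewrite qform_scal_real by auto. rewrite <- hnorm_sqr. f_equal. f_equal. field. lra.
Qed.

Lemma qform_add_preimage g u s : dom T g -> dom T u -> app T u = g ->
  qform T (hadd g (hscal s u)) = Cadd (Cadd (Cadd (qform T g) (Cmul (Cconj s) (inner (app T g) u)))
    (Cmul s (RtoC (sqnorm g)))) (Cmul (RtoC (Cnorm2 s)) (inner g u)).
Proof.
  intros hg hu hTu. unfold qform.
  rewrite app_add, app_scal, hTu by auto using dom_scal.
  rewrite !inner_addl, !inner_addr, !inner_scall, !inner_scalr, (inner_self g).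
  destruct (inner (app T g) g), (inner (app T g) u), (inner g u), s. unfold Cnorm2, RtoC; Csolve.
Qed.

End QuadraticForm.

Section MAccretiveClosedRange.
Context {H : Hilbert}.
Variable T : Operator H.
Hypothesis T_linear : linear_operator T.
Hypothesis T_closed : closed_operator T.
Hypothesis T_range_closed : hclosed_set (range T).
Hypothesis T_accretive : forall f, dom T f -> 0 <= Cre (qform T f).
Hypothesis T_shift_onto : forall x, exists g, dom T g /\ hadd (app T g) g = x.

Lemma inner_orth_range_sym k r : (forall r', range T r' -> inner k r' = C0) -> range T r -> inner r k = C0.
Proof. intros h hr. rewrite inner_conj, (h r hr). Csolve. Qed.

(* write x = T g + g: orthogonality gives <g, x> = |x|^2 = Re <T g, g> + |g|^2 >= |g|^2,
   so Cauchy-Schwarz forces x = g, whence T x = 0 *)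
Lemma orth_range_in_kernel x : (forall r, range T r -> inner x r = C0) -> dom T x /\ app T x = hzero.
Proof.
  intro hperp. destruct (T_shift_onto x) as [g [hg e]].
  assert (hxg : inner g x = RtoC (sqnorm x)).
  { rewrite <- inner_self. rewrite <- e at 2. rewrite inner_addl, (inner_orth_range_sym x (app T g) hperp)
      by (apply range_app; auto). Csolve. }
  assert (hx : sqnorm x = Cre (qform T g) + sqnorm g).
  { assert (E : inner x g = Cadd (qform T g) (inner g g)) by (rewrite <- e at 1; apply inner_addl).
    rewrite inner_conj, hxg in E. apply (f_equal Cre) in E. unfold sqnorm, RtoC, Cconj, Cadd in *; simpl in *. lra. }
  pose proof (T_accretive g hg). pose proof (Cauchy_Schwarz g x) as hcs.
  rewrite hxg, Cabs_RtoC, Rabs_right in hcs by (apply Rle_ge, sqnorm_ge0).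
  pose proof (hnorm_sqr x); pose proof (hnorm_sqr g); pose proof (hnorm_ge0 x); pose proof (hnorm_ge0 g).
  assert (hgx : sqnorm g = sqnorm x) by (destruct (Req_dec (hnorm x) 0) as [h0|h0]; nra).
  assert (hz : sqnorm (hsub x g) = 0).
  { rewrite sqnorm_sub, inner_conj, hxg. simpl. lra. }
  apply sqnorm_eq0 in hz. assert (xg : x = g).
  { replace x with (hadd (hsub x g) g) by hsolve. rewrite hz. apply hadd_0l. }
  subst g. split; auto. replace (app T x) with (hsub (hadd (app T x) x) x) by hsolve. rewrite e. hsolve.
Qed.

Lemma range_kernel_decomposition f : dom T f -> exists p k, range T p /\ dom T p /\ dom T k /\
  app T k = hzero /\ f = hadd p k /\ (forall r, range T r -> inner k r = C0) /\ qform T f = qform T p.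
Proof.
  intro hf. destruct (orthogonal_projection (range T) (range_zero T T_linear) (range_add T T_linear)
    (range_scal T T_linear) T_range_closed f) as [p [hp hperp]].
  destruct (orth_range_in_kernel _ hperp) as [hk hTk].
  assert (hDp : dom T p) by (replace p with (hsub f (hsub f p)) by hsolve; apply dom_sub; auto).
  exists p, (hsub f p). repeat split; auto. { hsolve. }
  unfold qform. replace f with (hadd p (hsub f p)) at 1 2 by hsolve.
  rewrite app_add, hTk, hadd_zero, inner_addr by auto.
  rewrite (inner_orth_range_sym (hsub f p) (app T p) hperp) by (apply range_app; auto). Csolve.
Qed.

Lemma pairing_with_preimage g u C : dom T g -> dom T u -> app T u = g -> hnorm g = 1 ->
  hnorm u <= C -> 0 < C -> Cnorm2 (Cadd (inner (app T g) u) C1) <= 4 * C * Cabs (qform T g).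
Proof.
  intros hg hu hTu hg1 huC hC.
  assert (hng : sqnorm g = 1) by (rewrite <- hnorm_sqr, hg1; ring).
  set (tau := / (2 * C)). assert (htau : tau * (2 * C) = 1) by (unfold tau; field; lra).
  assert (htau0 : 0 < tau) by (unfold tau; apply Rinv_0_lt_compat; lra).
  (* accretivity of g + s u with s = - tau (<T g, u> + 1) *)
  pose proof (T_accretive _ (dom_add T T_linear _ _ hg
    (dom_scal T T_linear (Cmul (RtoC (- tau)) (Cadd (inner (app T g) u) C1)) _ hu))) as hacc.
  rewrite qform_add_preimage, hng in hacc by auto.
  set (A := Cnorm2 (Cadd (inner (app T g) u) C1)).
  replace (Cre _) with (Cre (qform T g) - tau * A + tau * tau * A * Cre (inner g u)) in hacc
    by (unfold A; destruct (qform T g), (inner (app T g) u), (inner g u); unfold Cnorm2, RtoC; simpl; ring).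
  assert (hgu : Cre (inner g u) <= C).
  { pose proof (Cre_le_Cabs (inner g u)); pose proof (Cauchy_Schwarz g u); pose proof (Rle_abs (Cre (inner g u))).
    rewrite hg1 in *. lra. }
  pose proof (Cre_le_Cabs (qform T g)); pose proof (Rle_abs (Cre (qform T g))).
  assert (hA : 0 <= A) by apply Cnorm2_ge0.
  assert (tau * tau * A * Cre (inner g u) <= tau * tau * A * C) by (apply Rmult_le_compat_l; nra).
  assert (tau * tau * A * C = A * tau / 2)
    by (replace (tau * tau * A * C) with (A * tau * (tau * (2 * C)) / 2) by field; rewrite htau; field).
  assert (A * tau <= 2 * Cabs (qform T g)) by lra.
  replace A with (A * tau * (2 * C)) by (rewrite Rmult_assoc, htau; ring). nra.
Qed.

Variable sg : R.
Hypothesis sg_sign : sg = 1 \/ sg = -1.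
Hypothesis T_curvature : forall M, exists eps, 0 < eps /\ forall f, dom T f -> hnorm f = 1 ->
  Cabs (qform T f) <= eps -> 0 < sg * Cim (qform T f) ->
  M * (Cim (qform T f) * Cim (qform T f)) <= Cre (qform T f).

Lemma curvature_homogeneous M : exists eps, 0 < eps /\ forall v, dom T v -> 0 < sqnorm v ->
  Cabs (qform T v) <= eps * sqnorm v -> 0 < sg * Cim (qform T v) ->
  M * (Cim (qform T v) * Cim (qform T v)) <= Cre (qform T v) * sqnorm v.
Proof.
  destruct (T_curvature M) as [eps [heps hcurv]]. exists eps. split; auto.
  intros v hv hn hsmall hpos.
  assert (hv0 : 0 < hnorm v) by (pose proof (hnorm_sqr v); pose proof (hnorm_ge0 v); nra).
  destruct (qform_normalize T T_linear v hv hv0) as [hv' [hv1 hq]].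
  assert (hi : 0 < / sqnorm v) by (apply Rinv_0_lt_compat; lra).
  specialize (hcurv _ hv' hv1). rewrite hq in hcurv. simpl in hcurv.
  rewrite Cabs_mul, Cabs_RtoC, Rabs_right in hcurv by lra.
  replace (/ sqnorm v * Cre (qform T v) - 0 * Cim (qform T v)) with (Cre (qform T v) / sqnorm v) in hcurv
    by (unfold Rdiv; ring).
  replace (/ sqnorm v * Cim (qform T v) + 0 * Cre (qform T v)) with (Cim (qform T v) / sqnorm v) in hcurv
    by (unfold Rdiv; ring).
  assert (hc := hcurv ltac:(apply (Rmult_le_reg_l (sqnorm v)); [lra|]; field_simplify; lra)
    ltac:(unfold Rdiv; replace (sg * (Cim (qform T v) * / sqnorm v)) with (sg * Cim (qform T v) * / sqnorm v) by ring;
          apply Rmult_lt_0_compat; lra)).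
  apply (Rmult_le_compat_r (sqnorm v * sqnorm v)) in hc; [|nra].
  replace (M * (Cim (qform T v) / sqnorm v * (Cim (qform T v) / sqnorm v)) * (sqnorm v * sqnorm v))
    with (M * (Cim (qform T v) * Cim (qform T v))) in hc by (field; lra).
  replace (Cre (qform T v) / sqnorm v * (sqnorm v * sqnorm v)) with (Cre (qform T v) * sqnorm v) in hc
    by (field; lra).
  exact hc.
Qed.

Lemma qform_tilt g u t : dom T g -> dom T u -> app T u = g -> sqnorm g = 1 ->
  qform T (hadd g (hscal (mkC 0 (sg * t)) u)) = Cadd (mkC 0 (2 * sg * t))
    (Cadd (Cadd (qform T g) (Cmul (mkC 0 (- (sg * t))) (Cadd (inner (app T g) u) C1)))
      (Cmul (RtoC (t * t)) (inner g u))).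
Proof.
  intros hg hu hTu hng. rewrite qform_add_preimage, hng by auto.
  assert (hs : sg * sg = 1) by (destruct sg_sign; subst; ring).
  destruct (qform T g), (inner (app T g) u), (inner g u). unfold Cnorm2, RtoC.
  apply Cplx_ext; simpl; nra.
Qed.

Lemma Rabs_sg : Rabs sg = 1.
Proof. destruct sg_sign; subst; [apply Rabs_R1 | rewrite Rabs_left; lra]. Qed.

Lemma tilt_error_bound q p w t C : 1 <= C -> 0 < t -> Cabs q <= t * t / (16 * C) ->
  Cabs (Cadd p C1) <= t / 2 -> Cabs w <= C ->
  Cabs (Cadd (Cadd q (Cmul (mkC 0 (- (sg * t))) (Cadd p C1))) (Cmul (RtoC (t * t)) w)) <= t * t * (C + 1).
Proof.
  intros hC ht hq hp hw.
  eapply Rle_trans; [apply Cabs_triangle|]. eapply Rle_trans; [apply Rplus_le_compat_r, Cabs_triangle|].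
  rewrite !Cabs_mul, Cabs_imag, Cabs_RtoC, Rabs_Ropp, Rabs_mult, Rabs_sg, (Rabs_right t), Rabs_right by nra.
  assert (t * t / (16 * C) <= t * t / 16) by (apply Rmult_le_compat_l; [nra|]; apply Rinv_le_contravar; lra).
  pose proof (Cabs_ge0 (Cadd p C1)). nra.
Qed.

Lemma imag_dominant_bounds t E : 0 < t -> Cabs E <= t ->
  let z := Cadd (mkC 0 (2 * sg * t)) E in Cre z <= Cabs E /\ t <= sg * Cim z /\ Cabs z <= 3 * t.
Proof.
  intros ht hE z.
  assert (hsE : Rabs (sg * Cim E) <= Cabs E) by (rewrite Rabs_mult, Rabs_sg; pose proof (Cim_le_Cabs E); lra).
  apply Rabs_le_inv in hsE. pose proof (Cre_le_Cabs E). pose proof (Rle_abs (Cre E)).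
  assert (hs : sg * sg = 1) by (destruct sg_sign; subst; ring).
  repeat split.
  - change (0 + Cre E <= Cabs E). lra.
  - change (t <= sg * (2 * sg * t + Cim E)). nra.
  - unfold z. eapply Rle_trans; [apply Cabs_triangle|]. rewrite Cabs_imag, !Rabs_mult, Rabs_sg, !Rabs_right by lra.
    lra.
Qed.

Lemma tilted_vector_estimates g u C t : dom T g -> dom T u -> app T u = g -> hnorm g = 1 ->
  hnorm u <= C -> 1 <= C -> 0 < t -> t * C <= / 4 -> Cabs (qform T g) <= t * t / (16 * C) ->
  let v := hadd g (hscal (mkC 0 (sg * t)) u) in
  dom T v /\ / 2 <= sqnorm v <= 2 /\ Cre (qform T v) <= t * t * (C + 1) /\
  t <= sg * Cim (qform T v) /\ Cabs (qform T v) <= 3 * t.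
Proof.
  intros hg hu hTu hg1 huC hC ht htC hQg v.
  assert (hp : Cabs (Cadd (inner (app T g) u) C1) <= t / 2).
  { pose proof (pairing_with_preimage g u C hg hu hTu hg1 huC ltac:(lra)) as hpair.
    apply Cabs_le_of_sqr; [lra|]. apply Rle_trans with (4 * C * (t * t / (16 * C))); [|right; field; lra].
    apply Rle_trans with (1 := hpair). apply Rmult_le_compat_l; lra. }
  assert (hgu : Cabs (inner g u) <= C) by (pose proof (Cauchy_Schwarz g u); rewrite hg1 in *; lra).
  pose proof (tilt_error_bound _ _ _ t C hC ht hQg hp hgu) as hE.
  assert (htC1 : t * (C + 1) <= / 2) by nra.
  assert (t * t * (C + 1) <= t * / 2) by (rewrite Rmult_assoc; apply Rmult_le_compat_l; lra).
  destruct (imag_dominant_bounds t _ ht (Rle_trans _ _ t hE ltac:(lra))) as [hre [him habs]].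
  unfold v. rewrite qform_tilt by (auto; rewrite <- hnorm_sqr, hg1; ring).
  repeat split; [apply dom_add, dom_scal; auto | | | lra | auto | auto];
    pose proof (sqnorm_tilt_bounds g u (mkC 0 (sg * t)) t C hg1 huC ltac:(lra) htC
      ltac:(rewrite Cabs_imag, Rabs_mult, Rabs_sg, Rabs_right; lra)); lra.
Qed.

Lemma range_qform_bounded_below : exists d, 0 < d /\
  forall g, range T g -> dom T g -> hnorm g = 1 -> d <= Cabs (qform T g).
Proof.
  destruct (closed_range_preimage_bound T T_linear T_closed T_range_closed) as [L [hL hpre]].
  set (C := L + 1). destruct (curvature_homogeneous (2 * C + 3)) as [eps [heps hcurv]].
  set (t := Rmin (/ (4 * C)) (eps / 6)).
  assert (ht : 0 < t) by (apply Rmin_glb_lt; [apply Rinv_0_lt_compat; unfold C|]; lra).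
  assert (htC : t * C <= / 4).
  { replace (/ 4) with (/ (4 * C) * C) by (field; unfold C; lra).
    apply Rmult_le_compat_r; [unfold C; lra | apply Rmin_l]. }
  assert (hte : t <= eps / 6) by apply Rmin_r.
  exists (t * t / (16 * C)). split. { apply Rdiv_lt_0_compat; [nra | unfold C; lra]. }
  intros g hg hDg hg1. apply Rnot_lt_le. intro hsmall.
  destruct (hpre g hg) as [u [hu [hTu hun]]]. rewrite hg1 in hun.
  destruct (tilted_vector_estimates g u C t hDg hu hTu hg1 ltac:(unfold C; lra) ltac:(unfold C; lra)
    ht htC (Rlt_le _ _ hsmall)) as [hv [hnv [hre [him habs]]]].
  specialize (hcurv _ hv ltac:(lra) ltac:(nra) ltac:(lra)).
  set (q := Cim (qform T _)) in *.
  assert (hq2 : t * t <= q * q) by (destruct sg_sign; subst sg; nra).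
  assert (Cre (qform T (hadd g (hscal (mkC 0 (sg * t)) u))) * sqnorm (hadd g (hscal (mkC 0 (sg * t)) u))
          <= t * t * (C + 1) * 2) by (apply Rmult_le_compat; [apply T_accretive; auto | | |]; lra).
  assert ((2 * C + 3) * (t * t) <= (2 * C + 3) * (q * q)) by (apply Rmult_le_compat_l; unfold C; lra).
  assert (0 < t * t) by nra.
  lra.
Qed.

Lemma unit_kernel_vector d : 0 < d ->
  (forall g, range T g -> dom T g -> hnorm g = 1 -> d <= Cabs (qform T g)) ->
  (exists f, dom T f /\ hnorm f = 1 /\ Cabs (qform T f) < d) ->
  exists a, dom T a /\ app T a = hzero /\ hnorm a = 1 /\ forall r, range T r -> inner a r = C0.
Proof.
  intros hd hbelow [f [hf [hf1 hsmall]]].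
  destruct (range_kernel_decomposition f hf) as [p [k [hp [hDp [hDk [hTk [hfpk [hperp hq]]]]]]]].
  pose proof (hnorm_ge0 k). destruct (Req_dec (hnorm k) 0) as [hk0|hk0].
  { apply hnorm_eq0 in hk0. rewrite hk0, hadd_zero in hfpk. subst f.
    specialize (hbelow p hp hDp hf1). lra. }
  exists (hscal (RtoC (/ hnorm k)) k). repeat split.
  - apply dom_scal; auto.
  - rewrite app_scal, hTk by auto. apply hscal_0r.
  - apply hnorm_normalize. lra.
  - intros r hr. rewrite inner_scall, hperp by auto. Csolve.
Qed.

Lemma unit_range_vector_below_line ka :
  (exists f, dom T f /\ hnorm f = 1 /\ Cre (qform T f) < ka * (sg * Cim (qform T f))) ->
  exists g, range T g /\ dom T g /\ hnorm g = 1 /\ Cre (qform T g) < ka * (sg * Cim (qform T g)).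
Proof.
  intros [f [hf [_ hline]]].
  destruct (range_kernel_decomposition f hf) as [p [k [hp [hDp [_ [_ [_ [_ hq]]]]]]]].
  rewrite hq in hline. pose proof (hnorm_ge0 p).
  destruct (Req_dec (hnorm p) 0) as [h0|h0].
  { apply hnorm_eq0 in h0. subst p. unfold qform in hline.
    rewrite app_zero, inner_0l in hline by auto. simpl in hline. lra. }
  destruct (qform_normalize T T_linear p hDp ltac:(lra)) as [hD' [h1 hq']].
  exists (hscal (RtoC (/ hnorm p)) p). split; [apply (range_scal T T_linear); auto|].
  split; [auto|]. split; [auto|]. rewrite hq'. simpl.
  assert (0 < / sqnorm p) by (apply Rinv_0_lt_compat; rewrite <- hnorm_sqr; nra).
  replace (/ sqnorm p * Cre (qform T p) - 0 * Cim (qform T p)) with (/ sqnorm p * Cre (qform T p)) by ring.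
  replace (ka * (sg * (/ sqnorm p * Cim (qform T p) + 0 * Cre (qform T p))))
    with (/ sqnorm p * (ka * (sg * Cim (qform T p)))) by ring.
  apply Rmult_lt_compat_l; auto.
Qed.

Lemma qform_kernel_range_mix a g r : dom T a -> app T a = hzero -> hnorm a = 1 ->
  (forall r', range T r' -> inner a r' = C0) -> range T g -> dom T g -> hnorm g = 1 -> 0 <= r <= 1 ->
  exists v, dom T v /\ hnorm v = 1 /\ qform T v = Cmul (RtoC r) (qform T g).
Proof.
  intros hDa hTa ha1 hperp hg hDg hg1 hr.
  assert (hag : inner a g = C0) by auto.
  assert (hga : inner (app T g) a = C0) by (apply inner_orth_range_sym; auto using range_app).
  set (c1 := sqrt (1 - r)). set (c2 := sqrt r).
  assert (hc1 : c1 * c1 = 1 - r) by (apply sqrt_sqrt; lra).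
  assert (hc2 : c2 * c2 = r) by (apply sqrt_sqrt; lra).
  exists (hadd (hscal (RtoC c1) a) (hscal (RtoC c2) g)). repeat split.
  - apply (dom_add T T_linear); apply (dom_scal T T_linear); auto.
  - change (sqrt (sqnorm (hadd (hscal (RtoC c1) a) (hscal (RtoC c2) g))) = 1). rewrite <- sqrt_1. f_equal.
    rewrite sqnorm_add, !sqnorm_scal, inner_scall, inner_scalr, hag, <- (hnorm_sqr a), <- (hnorm_sqr g), ha1, hg1.
    unfold Cnorm2, RtoC; simpl. lra.
  - unfold qform. rewrite app_add, !app_scal, hTa, hscal_0r, hadd_0l by auto using dom_scal.
    rewrite inner_addr, !inner_scall, !inner_scalr, hga. fold (qform T g).
    rewrite <- hc2. destruct (qform T g). unfold RtoC. Csolve.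
Qed.

Lemma Cabs_le_Re_add_sg_Im w : 0 <= Cre w -> 0 < sg * Cim w -> Cabs w <= Cre w + sg * Cim w.
Proof.
  intros hre him. pose proof (Cabs_le_Rabs_add w) as h. rewrite (Rabs_right (Cre w)) in h by lra.
  replace (Rabs (Cim w)) with (sg * Cim w) in h
    by (destruct sg_sign; subst sg; [rewrite Rabs_right | rewrite Rabs_left]; lra).
  exact h.
Qed.

Lemma range_qform_above_line a d : dom T a -> app T a = hzero -> hnorm a = 1 ->
  (forall r, range T r -> inner a r = C0) -> 0 < d ->
  (forall g, range T g -> dom T g -> hnorm g = 1 -> d <= Cabs (qform T g)) ->
  exists ka, 0 < ka /\ forall g, range T g -> dom T g -> hnorm g = 1 ->
    ka * (sg * Cim (qform T g)) <= Cre (qform T g).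
Proof.
  intros hDa hTa ha1 hperp hd hbelow.
  destruct (T_curvature 1) as [eps [heps hcurv]].
  set (e := Rmin eps (Rmin d 1)).
  assert (he0 : 0 < e) by (apply Rmin_glb_lt; [|apply Rmin_glb_lt]; lra).
  assert (hee : e <= eps) by apply Rmin_l.
  assert (hed : e <= d) by (eapply Rle_trans; [apply Rmin_r | apply Rmin_l]).
  assert (he1 : e <= 1) by (eapply Rle_trans; [apply Rmin_r | apply Rmin_r]).
  exists (e / 8). split; [lra|]. intros g hg hDg hg1. apply Rnot_lt_le. intro hline.
  set (w := qform T g) in *.
  assert (hw1 : 0 <= Cre w) by (apply T_accretive; auto).
  assert (hw2 : 0 < sg * Cim w) by (apply (Rmult_lt_reg_l (e / 8)); [| rewrite Rmult_0_r]; lra).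
  assert (hwd : d <= Cabs w) by (apply hbelow; auto).
  (* mixing in the kernel vector a, the form takes every value of the segment [0, w] on unit vectors *)
  set (r := e / (2 * Cabs w)).
  assert (hr0 : 0 < r) by (unfold r; apply Rdiv_lt_0_compat; lra).
  assert (hr1 : r <= / 2) by (unfold r; apply (Rmult_le_reg_r (2 * Cabs w)); [lra | field_simplify; lra]).
  destruct (qform_kernel_range_mix a g r hDa hTa ha1 hperp hg hDg hg1 ltac:(lra)) as [v [hDv [hv1 hqv]]].
  fold w in hqv.
  assert (hrw : r * Cabs w = e / 2) by (unfold r; field; lra).
  assert (hsv : 0 < sg * Cim (qform T v)) by (rewrite hqv; unfold RtoC; simpl; nra).
  assert (hcv : Cabs (qform T v) <= eps) by (rewrite hqv, Cabs_mul, Cabs_RtoC, Rabs_right; lra).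
  specialize (hcurv v hDv hv1 hcv hsv). rewrite hqv in hcurv. unfold RtoC in hcurv; simpl in hcurv.
  assert (hsq : Cim w * Cim w = (sg * Cim w) * (sg * Cim w)) by (destruct sg_sign; subst sg; ring).
  assert (hc : r * ((sg * Cim w) * (sg * Cim w)) <= Cre w)
    by (rewrite <- hsq; apply (Rmult_le_reg_l r); lra).
  assert (h1 : r * (sg * Cim w) < e / 8) by (apply (Rmult_lt_reg_r (sg * Cim w)); lra).
  pose proof (Cabs_le_Re_add_sg_Im w hw1 hw2).
  assert (r * Cabs w <= r * (e / 8 + 1) * (sg * Cim w)) by nra.
  nra.
Qed.

Hypothesis T_qform_near_zero : forall d, 0 < d -> exists f, dom T f /\ hnorm f = 1 /\ Cabs (qform T f) < d.
Hypothesis T_below_every_line : forall ka, 0 < ka ->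
  exists f, dom T f /\ hnorm f = 1 /\ Cre (qform T f) < ka * (sg * Cim (qform T f)).

Theorem curvature_excludes_closed_range : False.
Proof.
  destruct range_qform_bounded_below as [d [hd hbelow]].
  destruct (unit_kernel_vector d hd hbelow (T_qform_near_zero d hd)) as [a [hDa [hTa [ha1 hperp]]]].
  destruct (range_qform_above_line a d hDa hTa ha1 hperp hd hbelow) as [ka [hka habove]].
  destruct (unit_range_vector_below_line ka (T_below_every_line ka hka)) as [g [hg [hDg [hg1 hline]]]].
  specialize (habove g hg hDg hg1). lra.
Qed.

End MAccretiveClosedRange.

(** * Plane geometry *)

Lemma Cclosure_incl (X : Cplx -> Prop) z : X z -> Cclosure X z.
Proof.
  intros hz e he. exists z. split; auto. replace (Csub z z) with (RtoC 0) by (unfold RtoC; Csolve).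
  rewrite Cabs_RtoC, Rabs_R0. lra.
Qed.

Lemma Cclosure_idem (X : Cplx -> Prop) z : Cclosure (Cclosure X) z -> Cclosure X z.
Proof.
  intros hz e he. destruct (hz (e / 2) ltac:(lra)) as [w [hw hzw]].
  destruct (hw (e / 2) ltac:(lra)) as [w' [hw' hww']]. exists w'. split; auto.
  replace (Csub z w') with (Cadd (Csub z w) (Csub w w')) by Csolve.
  pose proof (Cabs_triangle (Csub z w) (Csub w w')). lra.
Qed.

Lemma eta_coord_closure (X : Cplx -> Prop) l m : Cabs m = 1 ->
  (forall z, X z -> eta_coord l m z >= 0) -> forall z, Cclosure X z -> eta_coord l m z >= 0.
Proof.
  intros hm hX z hz. apply Rnot_lt_ge. intro hneg.
  destruct (hz (- eta_coord l m z)) as [w [hw hzw]]; [lra|].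
  specialize (hX w hw).
  assert (eta_coord l m w - eta_coord l m z <= Cabs (Csub z w)).
  { replace (eta_coord l m w - eta_coord l m z) with (Cre (Cmul (Copp (Csub z w)) (Cconj m)))
      by (unfold eta_coord; destruct w, z, l, m; simpl; ring).
    pose proof (Cre_le_Cabs (Cmul (Copp (Csub z w)) (Cconj m))) as hre.
    pose proof (Rle_abs (Cre (Cmul (Copp (Csub z w)) (Cconj m)))).
    rewrite Cabs_mul, Cabs_opp, Cabs_conj, hm in hre. lra. }
  lra.
Qed.

Lemma Cim_eq0_of_unit_mul n w r : Cabs n = 1 -> Cmul n w = Cmul n (RtoC r) -> Cim w = 0.
Proof.
  intros hn e. pose proof (Cnorm2_unit n hn) as h. unfold Cnorm2 in h.
  pose proof (f_equal Cre e) as e1. pose proof (f_equal Cim e) as e2.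
  destruct n as [a b], w as [x y]. unfold RtoC in *; simpl in *.
  replace y with (a * (a * y + b * x) - b * (a * x - b * y)) by (transitivity (y * (a * a + b * b)); [ring | rewrite h; ring]).
  rewrite e1, e2. ring.
Qed.

Lemma xi_coord_eq l n z : xi_coord l n z = Cim (Cmul (Csub z l) (Cconj n)).
Proof. unfold xi_coord. destruct z, l, n. simpl. ring. Qed.

Lemma Cnorm2_coords l n z : Cabs n = 1 -> Cnorm2 (Csub z l) = xi_coord l n z ^ 2 + eta_coord l n z ^ 2.
Proof.
  intro hn. rewrite xi_coord_eq. unfold eta_coord.
  rewrite <- (Rmult_1_r (Cnorm2 (Csub z l))), <- (Cnorm2_unit (Cconj n)) by (rewrite Cabs_conj; auto).
  rewrite <- Cnorm2_mul. unfold Cnorm2. ring.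
Qed.

Section Ray.
Variables (l n z : Cplx).
Hypothesis n_unit : Cabs n = 1.
Let ray (t : R) : Cplx := Csub z (Cmul (RtoC t) n).

Lemma ray_dist t1 t2 : Cabs (Csub (ray t1) (ray t2)) = Rabs (t2 - t1).
Proof.
  replace (Csub (ray t1) (ray t2)) with (Cmul (RtoC (t2 - t1)) n) by (unfold ray, RtoC; Csolve).
  rewrite Cabs_mul, Cabs_RtoC, n_unit. ring.
Qed.

Lemma eta_coord_ray t : eta_coord l n (ray t) = eta_coord l n z - t.
Proof.
  pose proof (Cnorm2_unit n n_unit) as hn. unfold Cnorm2 in hn. unfold eta_coord, ray, RtoC.
  destruct z, l, n; simpl in *. replace t with (t * (Cre1 * Cre1 + Cim1 * Cim1)) at 3 by (rewrite hn; ring). ring.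
Qed.

Lemma xi_coord_ray t : xi_coord l n (ray t) = xi_coord l n z.
Proof. rewrite !xi_coord_eq. unfold ray, RtoC. destruct z, l, n; simpl. ring. Qed.

Lemma last_point_on_ray (Om : Cplx -> Prop) b : (forall w, Cclosure Om w -> Om w) -> Om z ->
  (forall t, 0 <= t -> Om (ray t) -> t <= b) ->
  exists ts, 0 <= ts <= b /\ Cboundary Om (ray ts).
Proof.
  intros hcl hz hb.
  assert (h0 : Om (ray 0)) by (replace (ray 0) with z by (unfold ray, RtoC; destruct z, n; Csolve); auto).
  destruct (completeness (fun t => 0 <= t /\ Om (ray t))) as [ts [hub hlub]].
  { exists b. intros t [ht hp]. auto. }
  { exists 0. split; [lra | auto]. }
  assert (hts0 : 0 <= ts) by (apply hub; split; [lra | auto]).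
  assert (hOm : Om (ray ts)).
  { apply hcl. intros e he. apply NNPP. intro hno.
    enough (ts <= ts - e / 2) by lra. apply hlub. intros t ht. apply Rnot_lt_le. intro hlt.
    apply hno. exists (ray t). split; [apply ht|]. rewrite ray_dist. pose proof (hub t ht).
    apply Rabs_def1; lra. }
  exists ts. split; [split; [auto | apply hb; auto] |].
  split; [apply Cclosure_incl; auto|]. intros [e [he hball]].
  enough (ts + e / 2 <= ts) by lra. apply hub. split; [lra|]. apply hball.
  rewrite ray_dist. apply Rabs_def1; lra.
Qed.

End Ray.

(* moving from z towards the supporting line along -n reaches the boundary without changing xi *)
Lemma boundary_point_below (Om : Cplx -> Prop) l n z : Cabs n = 1 -> (forall w, Cclosure Om w -> Om w) ->
  (forall w, Om w -> eta_coord l n w >= 0) -> Om z ->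
  exists z', Cboundary Om z' /\ xi_coord l n z' = xi_coord l n z /\
    0 <= eta_coord l n z' <= eta_coord l n z /\ Cabs (Csub z' l) <= Cabs (Csub z l).
Proof.
  intros hn hcl hsup hz.
  destruct (last_point_on_ray n z hn Om (eta_coord l n z) hcl hz) as [ts [hts hbd]].
  { intros t ht hOm. specialize (hsup _ hOm). rewrite eta_coord_ray in hsup by auto. lra. }
  exists (Csub z (Cmul (RtoC ts) n)). split; auto.
  rewrite xi_coord_ray, eta_coord_ray by auto.
  assert (hsup' := hsup _ (hcl _ (proj1 hbd))). rewrite eta_coord_ray in hsup' by auto.
  split; [auto | split; [lra|]].
  apply Cabs_le_of_sqr; [apply Cabs_ge0|]. rewrite Cabs_sqr, !(Cnorm2_coords l n) by auto.
  rewrite xi_coord_ray, eta_coord_ray by auto. nra.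
Qed.

(** * The rotated shift conj(n) (A - l) *)

Definition rotated_shift {H : PreHilbert} (A : Operator H) (l n : Cplx) : Operator H :=
  Build_Operator H (dom A) (fun f => hscal (Cconj n) (app (shift A l) f)).

Section RotatedShift.
Context {H : Hilbert}.
Variable A : Operator H.
Variables l n : Cplx.
Hypothesis A_linear : linear_operator A.
Hypothesis n_unit : Cabs n = 1.
Let T := rotated_shift A l n.

Lemma rotated_shift_linear : linear_operator T.
Proof.
  destruct A_linear as [h0 [hadd hscal]]. split; [|split]; simpl; auto.
  - intros f g hf hg. destruct (hadd f g hf hg) as [hd he]. split; auto. rewrite he. hsolve.
  - intros a f hf. destruct (hscal a f hf) as [hd he]. split; auto. rewrite he. hsolve.
Qed.

Lemma app_from_rotated_shift f : app A f = hadd (hscal l f) (hscal n (app T f)).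
Proof. simpl. rewrite hscal_assoc, Cmul_unit_conj, hscal_one by auto. hsolve. Qed.

Lemma rotated_shift_closed : closed_operator A -> closed_operator T.
Proof.
  intros hcl u x y hD hu hT.
  assert (hA : hconverges (fun k => app A (u k)) (hadd (hscal l x) (hscal n y))).
  { apply (hconverges_ext (fun k => hadd (hscal l (u k)) (hscal n (app T (u k))))).
    - intro k. symmetry. apply app_from_rotated_shift.
    - apply hconverges_add; apply hconverges_scal; auto. }
  destruct (hcl u x _ hD hu hA) as [hx hAx]. split; auto. simpl. rewrite hAx.
  rewrite <- (hscal_one _ y) at 2. rewrite <- (Cmul_conj_unit n n_unit), <- hscal_assoc. f_equal. hsolve.
Qed.

Lemma rotated_shift_range_closed : hclosed_set (range (shift A l)) -> hclosed_set (range T).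
Proof.
  intros hRc y hy.
  assert (hr : range (shift A l) (hscal n y)).
  { apply hRc. intros e he. destruct (hy e he) as [w [[f [hf ->]] hw]].
    exists (app (shift A l) f). split; [exists f; auto|].
    replace (hsub (hscal n y) (app (shift A l) f)) with (hscal n (hsub y (app T f))).
    - rewrite hnorm_scal, n_unit. lra.
    - simpl. rewrite <- (hscal_one _ (hsub (app A f) (hscal l f))) at 2.
      rewrite <- (Cmul_unit_conj n n_unit), <- hscal_assoc. hsolve. }
  destruct hr as [f [hf e]]. exists f. split; auto. change (y = hscal (Cconj n) (app (shift A l) f)). rewrite <- e.
  rewrite hscal_assoc, Cmul_conj_unit, hscal_one by auto. reflexivity.
Qed.

Lemma qform_rotated_shift f : hnorm f = 1 -> qform T f = Cmul (Csub (inner (app A f) f) l) (Cconj n).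
Proof.
  intro h1. unfold qform. simpl. rewrite inner_scall, inner_subl, inner_scall, inner_self.
  rewrite <- hnorm_sqr, h1. destruct (inner (app A f) f), l, n. unfold RtoC. Csolve.
Qed.

Lemma qform_rotated_shift_coords f : hnorm f = 1 ->
  Cre (qform T f) = eta_coord l n (inner (app A f) f) /\ Cim (qform T f) = xi_coord l n (inner (app A f) f).
Proof. intro h1. rewrite qform_rotated_shift, xi_coord_eq by auto. split; reflexivity. Qed.

Lemma Num_app f : dom A f -> hnorm f = 1 -> Num A (inner (app A f) f).
Proof. intros. exists f. auto. Qed.

Hypothesis n_support : supporting_normal (Cclosure (Num A)) l n.

Lemma rotated_shift_accretive f : dom T f -> 0 <= Cre (qform T f).
Proof.
  intro hf. pose proof (hnorm_ge0 f). destruct (Req_dec (hnorm f) 0) as [h0|h0].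
  { apply hnorm_eq0 in h0. subst f. unfold qform. rewrite inner_0r. simpl. lra. }
  destruct (qform_normalize T rotated_shift_linear f hf ltac:(lra)) as [hf' [h1 hq]].
  pose proof (proj2 n_support _ (Cclosure_incl _ _ (Num_app _ hf' h1))) as hs.
  fold (eta_coord l n (inner (app A (hscal (RtoC (/ hnorm f)) f)) (hscal (RtoC (/ hnorm f)) f))) in hs.
  rewrite <- (proj1 (qform_rotated_shift_coords _ h1)), hq in hs. simpl in hs.
  assert (0 < / sqnorm f) by (apply Rinv_0_lt_compat; rewrite <- hnorm_sqr; nra).
  nra.
Qed.

Lemma rotated_shift_plus_id_onto : (forall z, spectrum A z -> Cclosure (Num A) z) ->
  forall x, exists g, dom T g /\ hadd (app T g) g = x.
Proof.
  intros hspec x.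
  (* l - n lies strictly on the outer side of the supporting line, hence in the resolvent set *)
  assert (hres : resolvent A (Csub l n)).
  { apply NNPP. intro hno. pose proof (proj2 n_support _ (hspec _ hno)) as hh.
    pose proof (Cnorm2_unit n n_unit) as hn. unfold Cnorm2 in hn.
    destruct l, n; simpl in *. lra. }
  destruct hres as [B [_ [hB _]]]. destruct (hB (hscal n x)) as [hD he].
  exists (B (hscal n x)). split; auto. simpl in he |- *.
  transitivity (hscal (Cconj n) (hsub (app A (B (hscal n x))) (hscal (Csub l n) (B (hscal n x))))).
  - rewrite <- (hscal_one _ (B (hscal n x))) at 3. rewrite <- (Cmul_conj_unit n n_unit), <- hscal_assoc. hsolve.
  - rewrite he, hscal_assoc, Cmul_conj_unit, hscal_one by auto. reflexivity.
Qed.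

Lemma rotated_qform_near_zero : Cclosure (Num A) l ->
  forall d, 0 < d -> exists f, dom T f /\ hnorm f = 1 /\ Cabs (qform T f) < d.
Proof.
  intros hl d hd. destruct (hl d hd) as [w [[f [hf [h1 ->]]] hw]].
  exists f. repeat split; auto. rewrite qform_rotated_shift, Cabs_mul_conj_unit by auto.
  replace (Csub (inner (app A f) f) l) with (Copp (Csub l (inner (app A f) f))) by Csolve.
  rewrite Cabs_opp. exact hw.
Qed.

Lemma rotated_curvature sg : (forall M, exists eps, eps > 0 /\ forall z, Cboundary (Cclosure (Num A)) z ->
    Cabs (Csub z l) <= eps -> sg * xi_coord l n z > 0 -> eta_coord l n z / (xi_coord l n z * xi_coord l n z) >= M) ->
  forall M, exists eps, 0 < eps /\ forall f, dom T f -> hnorm f = 1 -> Cabs (qform T f) <= eps ->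
    0 < sg * Cim (qform T f) -> M * (Cim (qform T f) * Cim (qform T f)) <= Cre (qform T f).
Proof.
  intros hgam M. destruct (hgam M) as [eps [he hg]]. exists eps. split; [lra|].
  intros f hf h1 hsmall hpos. rewrite qform_rotated_shift, Cabs_mul_conj_unit in hsmall by auto.
  destruct (qform_rotated_shift_coords f h1) as [hre him]. rewrite hre, him in *.
  set (z := inner (app A f) f) in *.
  destruct (boundary_point_below (Cclosure (Num A)) l n z n_unit (Cclosure_idem _) (proj2 n_support)
    (Cclosure_incl _ _ (Num_app f hf h1))) as [z' [hbz [hxi [heta hdist]]]].
  specialize (hg z' hbz ltac:(lra) ltac:(rewrite hxi; lra)). rewrite hxi in hg.
  assert (hx0 : 0 < xi_coord l n z * xi_coord l n z).
  { assert (xi_coord l n z <> 0) by (intro h; rewrite h in hpos; lra). nra. }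
  apply Rge_le in hg. apply (Rmult_le_compat_r (xi_coord l n z * xi_coord l n z)) in hg; [|lra].
  unfold Rdiv in hg. rewrite Rmult_assoc, Rinv_l, Rmult_1_r in hg by lra. lra.
Qed.

Lemma rotated_below_every_line sg : (sg = 1 \/ sg = -1) -> ~ corner_point (Cclosure (Num A)) l ->
  forall ka, 0 < ka -> exists f, dom T f /\ hnorm f = 1 /\ Cre (qform T f) < ka * (sg * Cim (qform T f)).
Proof.
  intros hsg hnc ka hka. apply NNPP. intro hno. apply hnc.
  (* otherwise n rotated by the angle atan ka towards the side sg is a second supporting normal *)
  set (c := / sqrt (1 + ka * ka)). set (s := ka * c).
  assert (hsq : 0 < sqrt (1 + ka * ka)) by (apply sqrt_lt_R0; nra).
  assert (hc : 0 < c) by (apply Rinv_0_lt_compat; auto).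
  assert (hcs : c * c + s * s = 1).
  { unfold s, c. replace (ka * / sqrt (1 + ka * ka) * (ka * / sqrt (1 + ka * ka))) with
      (ka * ka * (/ sqrt (1 + ka * ka) * / sqrt (1 + ka * ka))) by ring.
    rewrite <- Rinv_mult, sqrt_sqrt by nra. field. nra. }
  set (w := mkC c (- (sg * s))). set (m := Cmul n w).
  assert (hw : Cabs w = 1).
  { unfold Cabs, w; simpl. replace (c * c + - (sg * s) * - (sg * s)) with 1; [apply sqrt_1|].
    destruct hsg; subst sg; nra. }
  assert (hm : Cabs m = 1) by (unfold m; rewrite Cabs_mul, n_unit, hw; ring).
  assert (hs : 0 < s) by (unfold s; apply Rmult_lt_0_compat; lra).
  assert (hws : Cim w <> 0) by (unfold w; simpl; intro h; destruct hsg; subst sg; lra).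
  exists n, m. split; [exact n_support|]. split; [split; auto|].
  - apply eta_coord_closure; auto. intros z [f [hf [h1 ->]]].
    assert (hline : ka * (sg * Cim (qform T f)) <= Cre (qform T f))
      by (apply Rnot_lt_le; intro; apply hno; eauto).
    destruct (qform_rotated_shift_coords f h1) as [hre him]. rewrite xi_coord_eq in him.
    unfold eta_coord in *.
    replace (Cre (Cmul (Csub (inner (app A f) f) l) (Cconj m))) with
      (c * (Cre (Cmul (Csub (inner (app A f) f) l) (Cconj n)) - ka * (sg * Cim (Cmul (Csub (inner (app A f) f) l) (Cconj n)))))
      by (unfold m, w, s; destruct (inner (app A f) f), l, n; simpl; destruct hsg; subst sg; ring).
    rewrite <- hre, <- him. apply Rle_ge, Rmult_le_pos; lra.
  - split; intro e; apply hws.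
    + apply (Cim_eq0_of_unit_mul n w 1 n_unit). fold m. rewrite <- e. unfold RtoC; Csolve.
    + apply (Cim_eq0_of_unit_mul n w (-1) n_unit). fold m.
      replace m with (Copp n) by (rewrite e; Csolve). unfold RtoC; Csolve.
Qed.

End RotatedShift.

Lemma gamma_infinite_signed (Om : Cplx -> Prop) l n :
  gamma_l_plus_infinite Om l n \/ gamma_l_minus_infinite Om l n ->
  exists sg, (sg = 1 \/ sg = -1) /\ forall M, exists eps, eps > 0 /\ forall z, Cboundary Om z ->
    Cabs (Csub z l) <= eps -> sg * xi_coord l n z > 0 -> eta_coord l n z / (xi_coord l n z * xi_coord l n z) >= M.
Proof.
  intros [hg | hg]; [exists 1 | exists (-1)]; (split; [auto|]); intro M;
    destruct (hg M) as [eps [he h]]; exists eps; split; auto; intros z hz hd hx; apply h; auto; lra.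
Qed.

Theorem mainTheorem5 (H : Hilbert) (A : Operator H) (l : Cplx) :
  linear_operator A ->
  densely_defined A ->
  closed_operator A ->
  (exists z, Cinterior (Num A) z) ->
  (exists z, ~ Num A z) ->
  (forall f, dom A f -> adjoint_dom A f) ->
  (forall z, spectrum A z -> Cclosure (Num A) z) ->
  Cboundary (Num A) l ->
  unilateral_infinite_curvature (Cclosure (Num A)) l ->
  ~ corner_point (Cclosure (Num A)) l ->
  ~ hclosed_set (range (shift A l)) /\ ess_spectrum A l.
Proof.
  intros hlin _ hcl _ _ _ hspec [hl _] [n [[hsupp _] hgam]] hnc.
  destruct (gamma_infinite_signed _ _ _ hgam) as [sg [hsg hcurv]].
  assert (hn : Cabs n = 1) by apply hsupp.
  assert (hnr : ~ hclosed_set (range (shift A l))).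
  { intro hRc. apply (curvature_excludes_closed_range (rotated_shift A l n)
      (rotated_shift_linear A l n hlin) (rotated_shift_closed A l n hn hcl)
      (rotated_shift_range_closed A l n hn hRc) (rotated_shift_accretive A l n hlin hn hsupp)
      (rotated_shift_plus_id_onto A l n hn hsupp hspec) sg hsg
      (rotated_curvature A l n hn hsupp sg hcurv)
      (rotated_qform_near_zero A l n hn hl) (rotated_below_every_line A l n hn hsupp sg hsg hnc)). }
  split; auto. intros [hf _]. auto.
Qed.
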